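(* The Kahan map $\mathcal K$ is a Liouville integrable Poisson map: when $n$ is even the functions $J_1,\dots,J_\lambda,H,F_{\lambda+1},\dots,F_{n/2-1}$, and when $n$ is odd the functions $J_1,\dots,J_\lambda,H,F_{\lambda+2},\dots,F_{(n-1)/2},C$, are invariants of $\mathcal K$ (functionally independent and pairwise in involution). It is also superintegrable: the $n-1$ functionally independent first integrals of the continuous system $\dot x_i=x_i\big(\sum_{j>i}a_jx_j-\sum_{j<i}a_jx_j\big)$ are invariants of $\mathcal K$.
   Context: $n\ge1$, $(a_1,\dots,a_n)\in\mathbb R^n\setminus\{0\}$, $\epsilon>0$ small. Poisson bracket on $\mathbb R^n$: $\{x_i,x_j\}=x_ix_j$ for $i<j$. $H=a_1x_1+\dots+a_nx_n$, $v_0:=0$, $v_i:=a_1x_1+\dots+a_ix_i$. $\mathcal K$ is the map $\tilde x_i=x_i\dfrac{(1-\epsilon H)(1+\epsilon H)}{(1-\epsilon H+2\epsilon v_{i-1})(1-\epsilon H+2\epsilon v_i)}$. $\ell$ is the smallest integer $\ge0$ with $a_{\ell+1}\ne0$ and $\lambda:=[\ell/2]$. $J_k:=\dfrac{x_1x_3\cdots x_{2k-1}}{x_2x_4\cdots x_{2k}}$ ($1\le k\le[n/2]$). For $n$ even, $F_k:=v_{2k}\dfrac{x_{2k+2}x_{2k+4}\cdots x_n}{x_{2k+1}x_{2k+3}\cdots x_{n-1}}$; for $n$ odd, $F_k:=v_{2k-1}\dfrac{x_{2k+1}x_{2k+3}\cdots x_n}{x_{2k}x_{2k+2}\cdots x_{n-1}}$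 and $C:=\dfrac{x_1x_3\cdots x_n}{x_2x_4\cdots x_{n-1}}$ (empty products $=1$). *)

From Stdlib Require Import Reals Lra Lia List.
Open Scope R_scope.

(* Points of R^n are represented as x : nat -> R, coordinates x 1, ..., x n
   (values at indices 0 and > n are irrelevant). *)
Definition point := nat -> R.

Fixpoint sum1 (f : nat -> R) (k : nat) : R :=
  match k with O => 0 | S k' => sum1 f k' + f k end.

Fixpoint prod_cnt (f : nat -> R) (lo c : nat) : R :=
  match c with O => 1 | S c' => f lo * prod_cnt f (S lo) c' end.

Definition prodR (f : nat -> R) (lo hi : nat) : R := prod_cnt f lo (S hi - lo).

Definition vv (a x : point) (i : nat) : R := sum1 (fun j => a j * x j) i.

Definition Hf (n : nat) (a : point) (x : point) : R := vv a x n.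

Definition kahan (n : nat) (a : point) (eps : R) (x : point) : point :=
  fun i =>
    if andb (Nat.leb 1 i) (Nat.leb i n) then
      x i * ((1 - eps * Hf n a x) * (1 + eps * Hf n a x)) /
        ((1 - eps * Hf n a x + 2 * eps * vv a x (i - 1)) *
         (1 - eps * Hf n a x + 2 * eps * vv a x i))
    else x i.

Definition Jf (k : nat) (x : point) : R :=
  prodR (fun j => x (2 * j - 1)%nat / x (2 * j)%nat) 1 k.

Definition Fev (n : nat) (a : point) (k : nat) (x : point) : R :=
  vv a x (2 * k) * prodR (fun j => x (2 * j)%nat / x (2 * j - 1)%nat) (S k) (n / 2).

Definition Fod (n : nat) (a : point) (k : nat) (x : point) : R :=
  vv a x (2 * k - 1) * prodR (fun j => x (2 * j + 1)%nat / x (2 * j)%nat) k ((n - 1) / 2).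

Definition Cf (n : nat) (x : point) : R :=
  x 1%nat * prodR (fun j => x (2 * j + 1)%nat / x (2 * j)%nat) 1 ((n - 1) / 2).

(* The list of invariants for Liouville integrability, with lambda = [l/2]:
   n even : J_1..J_lambda, H, F_{lambda+1}..F_{n/2-1}
   n odd  : J_1..J_lambda, H, F_{lambda+2}..F_{(n-1)/2}, C *)
Definition liouville_list (n : nat) (a : point) (l : nat) : list (point -> R) :=
  let lam := (l / 2)%nat in
  if Nat.even n then
    map Jf (seq 1 lam) ++ (Hf n a :: nil)
      ++ map (Fev n a) (seq (S lam) (n / 2 - 1 - lam))
  else
    map Jf (seq 1 lam) ++ (Hf n a :: nil)
      ++ map (Fod n a) (seq (S (S lam)) ((n - 1) / 2 - 1 - lam))
      ++ (Cf n :: nil).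

Definition upd (x : point) (i : nat) (t : R) : point :=
  fun j => if Nat.eqb j i then t else x j.

Definition gradient (n : nat) (f : point -> R) (x : point) (df : point) : Prop :=
  forall i, (1 <= i <= n)%nat -> derivable_pt_lim (fun t => f (upd x i t)) (x i) (df i).

(* Poisson bracket {x_i,x_j} = x_i x_j (i<j) evaluated on gradients at x:
   {f,g}(x) = sum_{i<j} x_i x_j (d_i f d_j g - d_j f d_i g) *)
Definition pbr (n : nat) (x df dg : point) : R :=
  sum1 (fun j => sum1 (fun i => x i * x j * (df i * dg j - df j * dg i)) (j - 1)) n.

Definition lin_indep (n : nat) (dfs : list point) : Prop :=
  forall c : nat -> R,
    (forall i, (1 <= i <= n)%nat ->
       fold_right Rplus 0
         (map (fun k => c k * nth k dfs (fun _ => 0) i) (seq 0 (length dfs))) = 0) ->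
    forall k, (k < length dfs)%nat -> c k = 0.

Definition indep_at (n : nat) (fs : list (point -> R)) (x : point) : Prop :=
  exists dfs : list point,
    Forall2 (fun f df => gradient n f x df) fs dfs /\ lin_indep n dfs.

(* functional independence on the domain D: the gradients are linearly
   independent on a dense subset of D *)
Definition func_indep (n : nat) (D : point -> Prop) (fs : list (point -> R)) : Prop :=
  forall y, D y -> forall delta, 0 < delta ->
    exists x, D x /\ (forall i, (1 <= i <= n)%nat -> Rabs (x i - y i) < delta)
              /\ indep_at n fs x.

Definition involutive (n : nat) (D : point -> Prop) (fs : list (point -> R)) : Prop :=
  forall f g, In f fs -> In g fs -> forall x, D x ->
    exists df dg, gradient n f x df /\ gradient n g x dg /\ pbr n x df dg = 0.

Definition torus (n : nat) (x : point) : Prop :=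
  forall i, (1 <= i <= n)%nat -> x i <> 0.

(* domain of the Kahan map where everything is defined: x in the torus,
   all denominators of K nonzero, and K(x) again in the torus *)
Definition kdom (n : nat) (a : point) (eps : R) (x : point) : Prop :=
  torus n x /\
  (1 - eps * Hf n a x) * (1 + eps * Hf n a x) <> 0 /\
  (forall i, (i <= n)%nat -> 1 - eps * Hf n a x + 2 * eps * vv a x i <> 0).

Definition invariant (n : nat) (a : point) (eps : R) (f : point -> R) : Prop :=
  forall x, kdom n a eps x -> f (kahan n a eps x) = f x.

Definition poisson_map (n : nat) (a : point) (eps : R) : Prop :=
  forall x, kdom n a eps x -> forall i j, (1 <= i)%nat -> (i < j <= n)%nat ->
    exists dKi dKj,
      gradient n (fun y => kahan n a eps y i) x dKi /\
      gradient n (fun y => kahan n a eps y j) x dKj /\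
      pbr n x dKi dKj = kahan n a eps x i * kahan n a eps x j.

Definition vfield (n : nat) (a x : point) (i : nat) : R :=
  x i * ((vv a x n - vv a x i) - vv a x (i - 1)).

Definition first_integral (n : nat) (a : point) (D : point -> Prop) (f : point -> R) : Prop :=
  forall x, D x -> exists df, gradient n f x df /\ sum1 (fun i => df i * vfield n a x i) n = 0.

(** With [D_k = 1 - eps H + 2 eps v_k] the Kahan map reads [K_i = x_i D_0 D_n / (D_(i-1) D_i)].
    Hence [v_k] is multiplied by [D_n / D_k] (so [H] is preserved) and each ratio
    [x_(q+1) / x_q] by [D_(q-1) / D_(q+1)]; in the alternating products [J_k], [F_k], [C]
    these factors telescope away.

    In the coordinates [log x_i] the bracket [{x_i, x_j} = x_i x_j] has constant
    coefficients, so brackets only involve partial sums of log-gradients.  The log-gradient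
    of [log K_i] is [e_i] plus a combination of those of [v_(i-1)], [v_i], [v_n], and
    bracketing these gives [{K_i, K_j} = K_i K_j]; likewise the members of the Liouville
    family commute, [C] being a Casimir.  The continuous system is the Hamiltonian flow of
    [H], so its first integrals are the functions commuting with [H]: ratios
    [x_s / x_(s+1)] where [a_s = a_(s+1) = 0], [H] itself, and a few rational functions of
    [x] and the [v_k] bridging the support of [a]; the rescaling rules above show that they
    are [K]-invariant too.

    For independence, moving [x_(l+1)] (and, for the superintegrable family, [x_r] with [r]
    the last index where [a_r <> 0]) makes the relevant partial sums nonzero while staying
    arbitrarily close; at such points well-chosen test covectors make the Jacobian of each
    family triangular with nonzero diagonal. *)

From Stdlib Require Import Reals Lra Lia List FunctionalExtensionality.
Open Scope R_scope.

Ltac nat_cases := repeat match goal with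
  | |- context [Nat.ltb ?i ?j] => destruct (Nat.ltb_spec i j)
  | |- context [Nat.eqb ?i ?j] => destruct (Nat.eqb_spec i j)
  | |- context [Nat.leb ?i ?j] => destruct (Nat.leb_spec i j) end.

Ltac simpl_min := repeat match goal with
  | |- context [Nat.min ?i ?j] =>
      first [rewrite (Nat.min_l i j) by lia | rewrite (Nat.min_r i j) by lia] end.

(** * Finite sums and products *)

Lemma sum1_ext f g k :
  (forall j, (1 <= j <= k)%nat -> f j = g j) -> sum1 f k = sum1 g k.
Proof.
  induction k as [|k IH]; intros E; simpl; [reflexivity|].
  rewrite IH, E; [reflexivity|lia|intros; apply E; lia].
Qed.

Lemma sum1_S f k : sum1 f (S k) = sum1 f k + f (S k).
Proof. reflexivity. Qed.

Lemma sum1_plus f g k : sum1 (fun j => f j + g j) k = sum1 f k + sum1 g k.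
Proof. induction k; simpl; [ring|rewrite IHk; ring]. Qed.

Lemma sum1_minus f g k : sum1 (fun j => f j - g j) k = sum1 f k - sum1 g k.
Proof. induction k; simpl; [ring|rewrite IHk; ring]. Qed.

Lemma sum1_opp f k : sum1 (fun j => - f j) k = - sum1 f k.
Proof. induction k; simpl; [ring|rewrite IHk; ring]. Qed.

Lemma sum1_scal c f k : sum1 (fun j => c * f j) k = c * sum1 f k.
Proof. induction k; simpl; [ring|rewrite IHk; ring]. Qed.

Lemma sum1_zero f k : (forall j, (1 <= j <= k)%nat -> f j = 0) -> sum1 f k = 0.
Proof.
  induction k as [|k IH]; intros E; simpl; [reflexivity|].
  rewrite IH, E; [ring|lia|intros; apply E; lia].
Qed.

Lemma sum1_single f k p : (1 <= p <= k)%nat ->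
  (forall j, (1 <= j <= k)%nat -> j <> p -> f j = 0) -> sum1 f k = f p.
Proof.
  induction k as [|k IH]; intros Hp E; simpl; [lia|].
  destruct (Nat.eq_dec p (S k)) as [->|Hne].
  - rewrite sum1_zero; [ring|]. intros; apply E; lia.
  - rewrite IH, (E (S k)); [ring|lia|lia|lia|intros; apply E; lia].
Qed.

Definition ev (j : nat) : point := fun i => if Nat.eqb j i then 1 else 0.

Lemma sum1_ev j k f : (1 <= j <= k)%nat -> sum1 (fun i => ev j i * f i) k = f j.
Proof.
  intros Hj. rewrite (sum1_single _ k j Hj); unfold ev.
  - rewrite Nat.eqb_refl; ring.
  - intros i _ Hne. destruct (Nat.eqb_spec j i); [lia|ring].
Qed.

Lemma sum1_ev_prefix j m : (1 <= j)%nat -> sum1 (ev j) m = if Nat.leb j m then 1 else 0.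
Proof.
  intros Hj. induction m as [|m IH]; cbn [sum1]; [|rewrite IH]; unfold ev; nat_cases; try lia; ring.
Qed.

Fixpoint sum_cnt (f : nat -> R) (lo c : nat) : R :=
  match c with O => 0 | S c' => f lo + sum_cnt f (S lo) c' end.

Lemma sum_cnt_ext f g lo c : (forall t, (lo <= t < lo + c)%nat -> f t = g t) ->
  sum_cnt f lo c = sum_cnt g lo c.
Proof.
  revert lo; induction c as [|c IH]; intros lo E; simpl; [reflexivity|].
  rewrite E, IH; [reflexivity|intros; apply E; lia|lia].
Qed.

Lemma sum_cnt_zero f lo c : (forall t, (lo <= t < lo + c)%nat -> f t = 0) -> sum_cnt f lo c = 0.
Proof.
  revert lo; induction c as [|c IH]; intros lo E; simpl; [reflexivity|].
  rewrite E, IH; [ring|intros; apply E; lia|lia].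
Qed.

Lemma sum_cnt_single f lo c p : (lo <= p < lo + c)%nat ->
  (forall t, (lo <= t < lo + c)%nat -> t <> p -> f t = 0) -> sum_cnt f lo c = f p.
Proof.
  revert lo; induction c as [|c IH]; intros lo Hp E; simpl; [lia|].
  destruct (Nat.eq_dec lo p) as [->|Hne].
  - rewrite sum_cnt_zero; [ring|]. intros; apply E; lia.
  - rewrite (IH (S lo)), E; [ring|lia|auto|lia|intros; apply E; lia].
Qed.

Lemma sum_cnt_snoc f lo c : sum_cnt f lo (S c) = sum_cnt f lo c + f (lo + c)%nat.
Proof.
  revert lo; induction c as [|c IH]; intros lo; simpl in *.
  - rewrite Nat.add_0_r; ring.
  - rewrite IH. replace (S lo + c)%nat with (lo + S c)%nat by lia. ring.
Qed.

Lemma sum_cnt_opp f lo c : sum_cnt (fun t => - f t) lo c = - sum_cnt f lo c.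
Proof. revert lo; induction c; intros lo; simpl; [|rewrite IHc]; ring. Qed.

Lemma sum1_sum_cnt (g : nat -> point) lo c m :
  sum1 (fun i => sum_cnt (fun t => g t i) lo c) m = sum_cnt (fun t => sum1 (g t) m) lo c.
Proof.
  revert lo; induction c as [|c IH]; intros lo; simpl.
  - apply sum1_zero; reflexivity.
  - rewrite sum1_plus, IH. reflexivity.
Qed.

Lemma prod_cnt_ext f g lo c : (forall j, (lo <= j < lo + c)%nat -> f j = g j) ->
  prod_cnt f lo c = prod_cnt g lo c.
Proof.
  revert lo; induction c as [|c IH]; intros lo E; simpl; [reflexivity|].
  rewrite E, IH; [reflexivity|intros; apply E; lia|lia].
Qed.

Lemma prod_cnt_mult f g lo c :
  prod_cnt (fun j => f j * g j) lo c = prod_cnt f lo c * prod_cnt g lo c.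
Proof. revert lo; induction c; intros lo; simpl; [|rewrite IHc]; ring. Qed.

Lemma prod_cnt_nz f lo c : (forall j, (lo <= j < lo + c)%nat -> f j <> 0) -> prod_cnt f lo c <> 0.
Proof.
  revert lo; induction c as [|c IH]; intros lo H; simpl; [lra|].
  apply Rmult_integral_contrapositive_currified; [apply H; lia|apply IH; intros; apply H; lia].
Qed.

Lemma prod_cnt_telescope (G : nat -> R) lo c :
  (forall j, (lo <= j <= lo + c)%nat -> G j <> 0) ->
  prod_cnt (fun j => G (S j) / G j) lo c = G (lo + c)%nat / G lo.
Proof.
  revert lo; induction c as [|c IH]; intros lo H; simpl.
  - rewrite Nat.add_0_r. field. apply H; lia.
  - rewrite IH by (intros; apply H; lia).
    replace (S lo + c)%nat with (lo + S c)%nat by lia. field. split; apply H; lia.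
Qed.

Lemma prod_cnt_telescope_inv (G : nat -> R) lo c :
  (forall j, (lo <= j <= lo + c)%nat -> G j <> 0) ->
  prod_cnt (fun j => G j / G (S j)) lo c = G lo / G (lo + c)%nat.
Proof.
  revert lo; induction c as [|c IH]; intros lo H; simpl.
  - rewrite Nat.add_0_r. field. apply H; lia.
  - rewrite IH by (intros; apply H; lia).
    replace (S lo + c)%nat with (lo + S c)%nat by lia. field. split; apply H; lia.
Qed.

Lemma prod_cnt_shift0 f lo c : prod_cnt f lo c = prod_cnt (fun t => f (lo + t)%nat) 0 c.
Proof.
  assert (E : forall s, prod_cnt f (lo + s) c = prod_cnt (fun t => f (lo + t)%nat) s c).
  { induction c as [|c IH]; intros s; simpl; [reflexivity|].
    rewrite <- IH. do 2 f_equal. lia. }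
  rewrite <- E, Nat.add_0_r. reflexivity.
Qed.

Lemma half_spec l : (2 * (l / 2) <= l < 2 * (l / 2) + 2)%nat.
Proof.
  pose proof (Nat.div_mod l 2 ltac:(lia)). pose proof (Nat.mod_upper_bound l 2 ltac:(lia)). lia.
Qed.

Lemma parity_cases n :
  (Nat.even n = true /\ n = 2 * (n / 2))%nat \/
  (Nat.even n = false /\ n = 2 * (n / 2) + 1 /\ (n - 1) / 2 = n / 2)%nat.
Proof.
  pose proof (half_spec n). pose proof (half_spec (n - 1)).
  destruct (Nat.even n) eqn:E; [left|right].
  - apply Nat.even_spec in E as [m ->]. split; [reflexivity|lia].
  - assert (Ho : Nat.odd n = true) by (unfold Nat.odd; rewrite E; reflexivity).
    apply Nat.odd_spec in Ho as [m ->]. repeat split; lia.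
Qed.

Lemma vv_S a x k : vv a x (S k) = vv a x k + a (S k) * x (S k).
Proof. reflexivity. Qed.

Lemma vv_zero a x k : (forall i, (1 <= i <= k)%nat -> a i = 0) -> vv a x k = 0.
Proof. intros Ha. apply sum1_zero. intros j Hj. rewrite Ha; [ring|lia]. Qed.

Lemma vv_const a x k k' : (k <= k')%nat -> (forall i, (k < i <= k')%nat -> a i = 0) ->
  vv a x k' = vv a x k.
Proof.
  intros Hk Ha. induction k' as [|k' IH]; [replace k with 0%nat by lia; reflexivity|].
  destruct (Nat.eq_dec k (S k')) as [->|Hne]; [reflexivity|].
  rewrite vv_S, IH, (Ha (S k')); [ring|lia|lia|intros; apply Ha; lia].
Qed.

Lemma vv_upd a x c t k : (1 <= c)%nat ->
  vv a (upd x c t) k = vv a x k + (if Nat.leb c k then a c * (t - x c) else 0).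
Proof.
  intros Hc. induction k as [|k IH].
  - cbn. nat_cases; [lia|ring].
  - rewrite !vv_S, IH. unfold upd. nat_cases; subst; try lia; ring.
Qed.

(** * The Kahan map and its invariants *)

Definition kden n a eps x k := 1 - eps * Hf n a x + 2 * eps * vv a x k.

Lemma kahan_eq n a eps x i : (1 <= i <= n)%nat ->
  kahan n a eps x i =
  x i * (kden n a eps x 0 * kden n a eps x n) / (kden n a eps x (i - 1) * kden n a eps x i).
Proof.
  intros Hi. unfold kahan, kden, Hf. cbn [vv sum1].
  replace (Nat.leb 1 i && Nat.leb i n)%bool with true
    by (symmetry; apply andb_true_intro; split; apply Nat.leb_le; lia).
  f_equal. ring.
Qed.

Section KahanPoint.
Variables (n : nat) (a : point) (eps : R) (x : point).
Hypothesis Hx : kdom n a eps x.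
Local Notation D := (kden n a eps x).
Local Notation Kx := (kahan n a eps x).

Lemma kden_nz k : (k <= n)%nat -> D k <> 0.
Proof. destruct Hx as (_ & _ & H). apply H. Qed.

Lemma kdom_nz i : (1 <= i <= n)%nat -> x i <> 0.
Proof. destruct Hx as (H & _). apply H. Qed.

Ltac kahan_field := field; repeat split; first [apply kden_nz; lia | apply kdom_nz; lia].

Lemma vv_kahan k : (k <= n)%nat -> vv a Kx k = vv a x k * D n / D k.
Proof.
  induction k as [|k IH]; intros Hk; [cbn [vv sum1]; field; apply kden_nz; lia|].
  rewrite vv_S, IH, kahan_eq, Nat.sub_succ, Nat.sub_0_r by lia.
  pose proof (kden_nz k ltac:(lia)). pose proof (kden_nz (S k) ltac:(lia)).
  unfold kden in *. rewrite vv_S in *. cbn [vv sum1]. field. auto.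
Qed.

Lemma Hf_kahan : Hf n a Kx = Hf n a x.
Proof. unfold Hf at 1. rewrite vv_kahan by lia. unfold Hf. field. apply kden_nz; lia. Qed.

Lemma tail_kahan k : (k <= n)%nat ->
  Hf n a Kx - vv a Kx k = (Hf n a x - vv a x k) * D 0 / D k.
Proof.
  intros Hk. rewrite Hf_kahan, vv_kahan by exact Hk.
  pose proof (kden_nz k Hk). unfold kden in *. unfold Hf in *. cbn [vv sum1]. field. auto.
Qed.

Lemma kahan_ratio q : (1 <= q)%nat -> (S q <= n)%nat ->
  Kx (S q) / Kx q = x (S q) / x q * (D (q - 1) / D (S q)).
Proof.
  intros. rewrite !kahan_eq, Nat.sub_succ, Nat.sub_0_r by lia. kahan_field.
Qed.

Lemma kahan_ratio_inv q : (1 <= q)%nat -> (S q <= n)%nat ->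
  Kx q / Kx (S q) = x q / x (S q) * (D (S q) / D (q - 1)).
Proof.
  intros. rewrite !kahan_eq, Nat.sub_succ, Nat.sub_0_r by lia. kahan_field.
Qed.

End KahanPoint.

Definition Jnf k (y : point) : R := prod_cnt (fun t => y (2 * t + 1)%nat / y (2 * t + 2)%nat) 0 k.
Definition Fprod n K (y : point) : R :=
  prod_cnt (fun t => y (K + 2 + 2 * t)%nat / y (K + 1 + 2 * t)%nat) 0 ((n - K) / 2).
Definition Fnf n a K (y : point) : R := vv a y K * Fprod n K y.
Definition Cnf M (y : point) : R :=
  y 1%nat * prod_cnt (fun t => y (2 * t + 3)%nat / y (2 * t + 2)%nat) 0 M.

Lemma Fprod_count n K c : n = (K + 2 * c)%nat -> ((n - K) / 2 = c)%nat.
Proof. intros. pose proof (half_spec (n - K)). lia. Qed.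

Lemma Jf_Jnf k y : Jf k y = Jnf k y.
Proof.
  unfold Jf, prodR, Jnf. rewrite Nat.sub_succ, Nat.sub_0_r, prod_cnt_shift0.
  apply prod_cnt_ext. intros j _. f_equal; f_equal; lia.
Qed.

Lemma Fev_Fnf n a m k y : n = (2 * m)%nat -> (k <= m)%nat -> Fev n a k y = Fnf n a (2 * k) y.
Proof.
  intros Hn Hk. unfold Fev, Fnf, Fprod, prodR. f_equal.
  rewrite (Fprod_count n (2 * k) (m - k)) by lia.
  replace (S (n / 2) - S k)%nat with (m - k)%nat by (pose proof (half_spec n); lia).
  rewrite prod_cnt_shift0. apply prod_cnt_ext. intros j _. f_equal; f_equal; lia.
Qed.

Lemma Fod_Fnf n a m k y : n = (2 * m + 1)%nat -> (1 <= k <= S m)%nat ->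
  Fod n a k y = Fnf n a (2 * k - 1) y.
Proof.
  intros Hn Hk. unfold Fod, Fnf, Fprod, prodR. f_equal.
  rewrite (Fprod_count n (2 * k - 1) (S m - k)) by lia.
  replace ((n - 1) / 2)%nat with m by (pose proof (half_spec (n - 1)); lia).
  rewrite prod_cnt_shift0. apply prod_cnt_ext. intros j _. f_equal; f_equal; lia.
Qed.

Lemma Cf_Cnf n M y : n = (2 * M + 1)%nat -> Cf n y = Cnf M y.
Proof.
  intros Hn. unfold Cf, Cnf, prodR. f_equal.
  replace (S ((n - 1) / 2) - 1)%nat with M by (pose proof (half_spec (n - 1)); lia).
  rewrite prod_cnt_shift0. apply prod_cnt_ext. intros j _. f_equal; f_equal; lia.
Qed.

Section LiouvilleInvariance.
Variables (n : nat) (a : point) (eps : R) (x : point).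
Hypothesis Hx : kdom n a eps x.
Local Notation D := (kden n a eps x).
Local Notation Kx := (kahan n a eps x).

Lemma Fnf_kahan K c : n = (K + 2 * c)%nat -> Fnf n a K Kx = Fnf n a K x.
Proof.
  intros Hn. unfold Fnf, Fprod. rewrite (Fprod_count n K c Hn), vv_kahan by (auto; lia).
  set (G t := D (K + 2 * t)%nat).
  rewrite (prod_cnt_ext _ (fun t => x (K + 2 + 2 * t)%nat / x (K + 1 + 2 * t)%nat * (G t / G (S t)))).
  2:{ intros t Ht. replace (K + 2 + 2 * t)%nat with (S (K + 1 + 2 * t)) by lia.
      rewrite kahan_ratio by (auto; lia). unfold G. do 3 f_equal; lia. }
  rewrite prod_cnt_mult, prod_cnt_telescope_inv by (intros; apply kden_nz; auto; lia).
  unfold G. rewrite Nat.mul_0_r, Nat.add_0_r, Nat.add_0_l, <- Hn.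
  field. split; apply kden_nz; auto; lia.
Qed.

Lemma Jnf_kahan k : (2 * k <= n)%nat -> (forall i, (1 <= i <= 2 * k)%nat -> a i = 0) ->
  Jnf k Kx = Jnf k x.
Proof.
  intros Hk Ha. unfold Jnf. set (G t := D (2 * t)%nat).
  rewrite (prod_cnt_ext _ (fun t => x (2 * t + 1)%nat / x (2 * t + 2)%nat * (G (S t) / G t))).
  2:{ intros t Ht. replace (2 * t + 2)%nat with (S (2 * t + 1)) by lia.
      rewrite kahan_ratio_inv by (auto; lia). unfold G. do 3 f_equal; lia. }
  rewrite prod_cnt_mult, prod_cnt_telescope by (intros; apply kden_nz; auto; lia).
  assert (E : G k = G 0%nat) by (unfold G, kden; rewrite vv_zero by exact Ha; reflexivity).
  rewrite Nat.add_0_l, E. field. apply kden_nz; auto; lia.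
Qed.

Lemma Cnf_kahan M : n = (2 * M + 1)%nat -> Cnf M Kx = Cnf M x.
Proof.
  intros Hn. unfold Cnf. set (G t := D (2 * t + 1)%nat).
  rewrite (prod_cnt_ext _ (fun t => x (2 * t + 3)%nat / x (2 * t + 2)%nat * (G t / G (S t)))).
  2:{ intros t Ht. replace (2 * t + 3)%nat with (S (2 * t + 2)) by lia.
      rewrite kahan_ratio by (auto; lia). unfold G. do 3 f_equal; lia. }
  rewrite prod_cnt_mult, prod_cnt_telescope_inv by (intros; apply kden_nz; auto; lia).
  unfold G. rewrite kahan_eq by lia. replace (2 * (0 + M) + 1)%nat with n by lia.
  cbn [Nat.mul Nat.add Nat.sub].
  field. repeat split; apply kden_nz; auto; lia.
Qed.

End LiouvilleInvariance.

(** * Log-gradients and the constant bracket *)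

Lemma upd_same (x : point) i : upd x i (x i) = x.
Proof.
  apply functional_extensionality. intros j. unfold upd.
  destruct (Nat.eqb_spec j i); subst; reflexivity.
Qed.

Section GradientRules.
Variables (n : nat) (x : point).

Lemma gradient_ext f df dg : gradient n f x df ->
  (forall i, (1 <= i <= n)%nat -> df i = dg i) -> gradient n f x dg.
Proof. intros H E i Hi. rewrite <- E by exact Hi. apply H, Hi. Qed.

Lemma gradient_fext f g df : (forall y, f y = g y) -> gradient n f x df -> gradient n g x df.
Proof.
  intros E H. replace g with f by (apply functional_extensionality; exact E). exact H.
Qed.

Lemma gradient_const c : gradient n (fun _ => c) x (fun _ => 0).
Proof. intros i _. apply derivable_pt_lim_const. Qed.

Lemma gradient_coord j : gradient n (fun y => y j) x (ev j).
Proof.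
  intros i _. unfold upd, ev.
  destruct (Nat.eqb j i); [apply derivable_pt_lim_id|apply derivable_pt_lim_const].
Qed.

Lemma gradient_plus f g df dg : gradient n f x df -> gradient n g x dg ->
  gradient n (fun y => f y + g y) x (fun i => df i + dg i).
Proof. intros Hf Hg i Hi. exact (derivable_pt_lim_plus _ _ _ _ _ (Hf i Hi) (Hg i Hi)). Qed.

Lemma gradient_minus f g df dg : gradient n f x df -> gradient n g x dg ->
  gradient n (fun y => f y - g y) x (fun i => df i - dg i).
Proof. intros Hf Hg i Hi. exact (derivable_pt_lim_minus _ _ _ _ _ (Hf i Hi) (Hg i Hi)). Qed.

Lemma gradient_scal c f df : gradient n f x df ->
  gradient n (fun y => c * f y) x (fun i => c * df i).
Proof. intros Hf i Hi. exact (derivable_pt_lim_scal _ _ _ _ (Hf i Hi)). Qed.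

Lemma gradient_mult f g df dg : gradient n f x df -> gradient n g x dg ->
  gradient n (fun y => f y * g y) x (fun i => df i * g x + f x * dg i).
Proof.
  intros Hf Hg i Hi. pose proof (derivable_pt_lim_mult _ _ _ _ _ (Hf i Hi) (Hg i Hi)) as H.
  cbv beta in H. rewrite upd_same in H. exact H.
Qed.

Lemma gradient_div f g df dg : gradient n f x df -> gradient n g x dg -> g x <> 0 ->
  gradient n (fun y => f y / g y) x (fun i => (df i * g x - dg i * f x) / (g x * g x)).
Proof.
  intros Hf Hg Hx i Hi.
  assert (Hx' : (fun t => g (upd x i t)) (x i) <> 0) by (cbv beta; rewrite upd_same; exact Hx).
  pose proof (derivable_pt_lim_div _ _ _ _ _ (Hf i Hi) (Hg i Hi) Hx') as H.
  cbv beta in H. rewrite upd_same in H. exact H.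
Qed.

End GradientRules.

(** On the torus we work with log-gradients [s_i = x_i d_i f], the gradients in the
    coordinates [log x_i]: in them the bracket [{x_i, x_j} = x_i x_j] has constant
    coefficients (lemma [pbr_log]). *)
Definition log_gradient n f (x : point) (s : point) : Prop := gradient n f x (fun i => s i / x i).

Section LogGradientRules.
Variables (n : nat) (x : point).
Hypothesis Hx : torus n x.

Lemma lg_ext f s s' : log_gradient n f x s ->
  (forall i, (1 <= i <= n)%nat -> s i = s' i) -> log_gradient n f x s'.
Proof. intros H E. eapply gradient_ext; [exact H|]. intros i Hi. cbv beta. rewrite E; auto. Qed.

Lemma lg_fext f g s : (forall y, f y = g y) -> log_gradient n f x s -> log_gradient n g x s.
Proof. apply gradient_fext. Qed.

Lemma lg_const c : log_gradient n (fun _ => c) x (fun _ => 0).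
Proof. eapply gradient_ext; [apply gradient_const|]. intros; unfold Rdiv; ring. Qed.

Lemma lg_coord j : log_gradient n (fun y => y j) x (fun i => x j * ev j i).
Proof.
  eapply gradient_ext; [apply gradient_coord|]. intros i Hi. unfold ev.
  destruct (Nat.eqb_spec j i) as [->|]; [field; apply Hx, Hi|unfold Rdiv; ring].
Qed.

Lemma lg_plus f g s t : log_gradient n f x s -> log_gradient n g x t ->
  log_gradient n (fun y => f y + g y) x (fun i => s i + t i).
Proof. intros. eapply gradient_ext; [apply gradient_plus; eauto|]. intros; unfold Rdiv; ring. Qed.

Lemma lg_minus f g s t : log_gradient n f x s -> log_gradient n g x t ->
  log_gradient n (fun y => f y - g y) x (fun i => s i - t i).
Proof. intros. eapply gradient_ext; [apply gradient_minus; eauto|]. intros; unfold Rdiv; ring. Qed.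

Lemma lg_scal c f s : log_gradient n f x s ->
  log_gradient n (fun y => c * f y) x (fun i => c * s i).
Proof. intros. eapply gradient_ext; [apply gradient_scal; eauto|]. intros; unfold Rdiv; ring. Qed.

Lemma lg_mult f g s t : log_gradient n f x s -> log_gradient n g x t ->
  log_gradient n (fun y => f y * g y) x (fun i => s i * g x + f x * t i).
Proof. intros. eapply gradient_ext; [apply gradient_mult; eauto|]. intros; unfold Rdiv; ring. Qed.

Lemma lg_div f g s t : log_gradient n f x s -> log_gradient n g x t -> g x <> 0 ->
  log_gradient n (fun y => f y / g y) x (fun i => (s i * g x - f x * t i) / (g x * g x)).
Proof.
  intros. eapply gradient_ext; [apply gradient_div; eauto|].
  intros i Hi. cbv beta. field. split; [assumption|apply Hx, Hi].
Qed.

Lemma lg_sum1 (F : nat -> point -> R) (S : nat -> point) k :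
  (forall j, (1 <= j <= k)%nat -> log_gradient n (F j) x (S j)) ->
  log_gradient n (fun y => sum1 (fun j => F j y) k) x (fun i => sum1 (fun j => S j i) k).
Proof.
  induction k as [|k IH]; intros H; simpl; [apply lg_const|].
  apply lg_plus; [apply IH; intros; apply H|apply H]; lia.
Qed.

Lemma lg_ratio p q : (1 <= q <= n)%nat ->
  log_gradient n (fun y => y p / y q) x (fun i => x p / x q * (ev p i - ev q i)).
Proof.
  intros Hq. eapply lg_ext; [apply lg_div; try apply lg_coord; apply Hx, Hq|].
  intros i _. cbv beta. field. apply Hx, Hq.
Qed.

Lemma lg_prod_ratio (p q : nat -> nat) lo c :
  (forall t, (lo <= t < lo + c)%nat -> (1 <= q t <= n)%nat) ->
  log_gradient n (fun y => prod_cnt (fun t => y (p t) / y (q t)) lo c) x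
    (fun i => prod_cnt (fun t => x (p t) / x (q t)) lo c *
              sum_cnt (fun t => ev (p t) i - ev (q t) i) lo c).
Proof.
  revert lo; induction c as [|c IH]; intros lo Hq; simpl.
  - eapply lg_ext; [apply lg_const|]. intros; cbv beta; ring.
  - eapply lg_ext; [apply lg_mult; [apply lg_ratio, Hq; lia|apply IH; intros; apply Hq; lia]|].
    intros; cbv beta; ring.
Qed.

End LogGradientRules.

Definition wvec (a x : point) k : point := fun i => if Nat.leb i k then a i * x i else 0.

Lemma lg_vv n a x k : torus n x -> log_gradient n (fun y => vv a y k) x (wvec a x k).
Proof.
  intros Hx. eapply lg_ext.
  { apply (lg_sum1 n x (fun j y => a j * y j) (fun j i => a j * (x j * ev j i))).
    intros; apply lg_scal, lg_coord, Hx. }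
  intros i Hi. unfold wvec. destruct (Nat.leb_spec i k).
  - rewrite (sum1_single _ k i) by (try lia; intros j _ Hne; unfold ev; nat_cases; lia || ring).
    unfold ev. rewrite Nat.eqb_refl. ring.
  - apply sum1_zero. intros j Hj. unfold ev. nat_cases; [lia|ring].
Qed.

Lemma lg_Hf n a x : torus n x -> log_gradient n (Hf n a) x (wvec a x n).
Proof. apply lg_vv. Qed.

Lemma wvec_in a x k i : (i <= k)%nat -> wvec a x k i = a i * x i.
Proof. intros. unfold wvec. nat_cases; [reflexivity|lia]. Qed.

Lemma sum1_wvec a x k m : sum1 (wvec a x k) m = vv a x (Nat.min m k).
Proof.
  induction m as [|m IH]; [reflexivity|]. cbn [sum1]. rewrite IH. unfold wvec.
  destruct (Nat.leb_spec (S m) k).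
  - rewrite Nat.min_l, Nat.min_l by lia. reflexivity.
  - rewrite Nat.min_r, Nat.min_r by lia. ring.
Qed.

Definition lbr n (s t : point) : R :=
  sum1 (fun j => sum1 (fun i => s i * t j - s j * t i) (j - 1)) n.

Lemma pbr_log n x s t : torus n x ->
  pbr n x (fun i => s i / x i) (fun i => t i / x i) = lbr n s t.
Proof.
  intros Hx. apply sum1_ext. intros j Hj. apply sum1_ext. intros i Hi.
  field. split; apply Hx; lia.
Qed.

Definition lbr_weight n (t : point) i : R := (sum1 t n - sum1 t i) - sum1 t (i - 1).

Lemma lbr_expand n s t : lbr n s t = sum1 (fun i => s i * lbr_weight n t i) n.
Proof.
  induction n as [|n IH]; [reflexivity|].
  unfold lbr in *. simpl sum1 at 1. rewrite IH, Nat.sub_0_r.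
  rewrite sum1_S, (sum1_ext (fun i => s i * lbr_weight (S n) t i)
                     (fun i => s i * lbr_weight n t i + t (S n) * s i))
    by (intros; unfold lbr_weight; rewrite !sum1_S; ring).
  rewrite sum1_plus, sum1_minus, !sum1_scal.
  rewrite (sum1_ext (fun j => s j * t (S n)) (fun j => t (S n) * s j)) by (intros; ring).
  rewrite sum1_scal. unfold lbr_weight. rewrite Nat.sub_succ, Nat.sub_0_r. ring.
Qed.

Section BracketAlgebra.
Variable n : nat.

Lemma lbr_anti s t : lbr n s t = - lbr n t s.
Proof.
  unfold lbr. rewrite <- sum1_opp. apply sum1_ext. intros j _.
  rewrite <- sum1_opp. apply sum1_ext. intros; ring.
Qed.

Lemma lbr_self s : lbr n s s = 0.
Proof. pose proof (lbr_anti s s). lra. Qed.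

Lemma lbr_addl s s' t : lbr n (fun i => s i + s' i) t = lbr n s t + lbr n s' t.
Proof. rewrite !lbr_expand, <- sum1_plus. apply sum1_ext; intros; ring. Qed.

Lemma lbr_minusl s s' t : lbr n (fun i => s i - s' i) t = lbr n s t - lbr n s' t.
Proof. rewrite !lbr_expand, <- sum1_minus. apply sum1_ext; intros; ring. Qed.

Lemma lbr_scall c s t : lbr n (fun i => c * s i) t = c * lbr n s t.
Proof. rewrite !lbr_expand, <- sum1_scal. apply sum1_ext; intros; ring. Qed.

Lemma lbr_addr s t t' : lbr n s (fun i => t i + t' i) = lbr n s t + lbr n s t'.
Proof. rewrite lbr_anti, lbr_addl, (lbr_anti s t), (lbr_anti s t'). ring. Qed.

Lemma lbr_minusr s t t' : lbr n s (fun i => t i - t' i) = lbr n s t - lbr n s t'.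
Proof. rewrite lbr_anti, lbr_minusl, (lbr_anti s t), (lbr_anti s t'). ring. Qed.

Lemma lbr_scalr c s t : lbr n s (fun i => c * t i) = c * lbr n s t.
Proof. rewrite lbr_anti, lbr_scall, (lbr_anti s t). ring. Qed.

Lemma lbr_sum_cntr s (V : nat -> point) lo c :
  lbr n s (fun i => sum_cnt (fun t => V t i) lo c) = sum_cnt (fun t => lbr n s (V t)) lo c.
Proof.
  revert lo; induction c as [|c IH]; intros lo; simpl.
  - rewrite lbr_expand. apply sum1_zero. intros i _. unfold lbr_weight.
    rewrite !(sum1_zero (fun _ => 0)) by reflexivity. ring.
  - rewrite lbr_addr, IH. reflexivity.
Qed.

Lemma lbr_ev_l j t : (1 <= j <= n)%nat -> lbr n (ev j) t = lbr_weight n t j.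
Proof. intros. rewrite lbr_expand, sum1_ev by assumption. reflexivity. Qed.

Lemma lbr_ev_ev i j : (1 <= i)%nat -> (i < j <= n)%nat -> lbr n (ev i) (ev j) = 1.
Proof.
  intros. rewrite lbr_ev_l by lia. unfold lbr_weight. rewrite !sum1_ev_prefix by lia.
  nat_cases; try lia; ring.
Qed.

End BracketAlgebra.

Section BracketWvec.
Variables (n : nat) (a x : point).

Lemma lbr_weight_wvec k i : (k <= n)%nat ->
  lbr_weight n (wvec a x k) i = vv a x k - vv a x (Nat.min i k) - vv a x (Nat.min (i - 1) k).
Proof. intros. unfold lbr_weight. rewrite !sum1_wvec, Nat.min_r by lia. reflexivity. Qed.

Lemma lbr_ev_wvec j k : (1 <= j <= n)%nat -> (k <= n)%nat ->
  lbr n (ev j) (wvec a x k) = vv a x k - vv a x (Nat.min j k) - vv a x (Nat.min (j - 1) k).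
Proof. intros. rewrite lbr_ev_l by assumption. apply lbr_weight_wvec; assumption. Qed.

Lemma lbr_wvec_ev k j : (1 <= j <= n)%nat -> (k <= n)%nat ->
  lbr n (wvec a x k) (ev j) = - (vv a x k - vv a x (Nat.min j k) - vv a x (Nat.min (j - 1) k)).
Proof. intros. rewrite lbr_anti, lbr_ev_wvec by assumption. reflexivity. Qed.

Lemma sum1_wvec_mul k (G : point) : (k <= n)%nat ->
  sum1 (fun i => wvec a x k i * G i) n = sum1 (fun i => a i * x i * G i) k.
Proof.
  induction n as [|m IH]; intros Hk; [replace k with 0%nat by lia; reflexivity|].
  destruct (Nat.eq_dec k (S m)) as [->|Hne].
  - apply sum1_ext. intros i Hi. rewrite wvec_in by lia. reflexivity.
  - rewrite sum1_S, IH by lia. unfold wvec. nat_cases; [lia|ring].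
Qed.

Lemma lbr_wvec_wvec k p : (k <= p <= n)%nat ->
  lbr n (wvec a x k) (wvec a x p) = vv a x k * (vv a x p - vv a x k).
Proof.
  intros Hkp. rewrite lbr_expand, sum1_wvec_mul by lia.
  rewrite (sum1_ext _ (fun i => a i * x i * (vv a x p - vv a x i - vv a x (i - 1)))).
  2:{ intros i Hi. rewrite lbr_weight_wvec, !Nat.min_l by lia. reflexivity. }
  clear Hkp. induction k as [|k IH]; [cbn; ring|].
  rewrite sum1_S, IH, vv_S, Nat.sub_succ, Nat.sub_0_r. ring.
Qed.

Lemma lbr_wvec_wvec_rev k p : (p <= k <= n)%nat ->
  lbr n (wvec a x k) (wvec a x p) = - (vv a x p * (vv a x k - vv a x p)).
Proof. intros. rewrite lbr_anti, lbr_wvec_wvec by lia. reflexivity. Qed.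

End BracketWvec.

Definition alt_vec K c : point :=
  fun i => sum_cnt (fun t => ev (K + 2 + 2 * t) i - ev (K + 1 + 2 * t) i) 0 c.

Lemma sum1_adjacent q m : (1 <= q)%nat ->
  sum1 (fun i => ev (S q) i - ev q i) m = - (if Nat.eqb m q then 1 else 0).
Proof. intros. rewrite sum1_minus, !sum1_ev_prefix by lia. nat_cases; try lia; ring. Qed.

Lemma lbr_adjacent n s q : (1 <= q)%nat -> (S q <= n)%nat ->
  lbr n s (fun i => ev (S q) i - ev q i) = s q + s (S q).
Proof.
  intros. rewrite lbr_expand.
  rewrite (sum1_ext _ (fun i => ev q i * s i + ev (S q) i * s i)).
  - rewrite sum1_plus, !sum1_ev by lia. reflexivity.
  - intros i Hi. unfold lbr_weight. rewrite !sum1_adjacent by lia. unfold ev. nat_cases; try lia; ring.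
Qed.

Lemma lbr_alt_vec n s K c : (K + 2 * c <= n)%nat ->
  lbr n s (alt_vec K c) = sum1 s (K + 2 * c) - sum1 s K.
Proof.
  intros Hc. unfold alt_vec. rewrite lbr_sum_cntr.
  rewrite (sum_cnt_ext _ (fun t => s (K + 1 + 2 * t)%nat + s (K + 2 + 2 * t)%nat)).
  2:{ intros t Ht. replace (K + 2 + 2 * t)%nat with (S (K + 1 + 2 * t)) by lia.
      apply lbr_adjacent; lia. }
  clear Hc. induction c as [|c IH]; [cbn; rewrite Nat.add_0_r; ring|].
  rewrite sum_cnt_snoc, IH. replace (K + 2 * S c)%nat with (S (S (K + 2 * c))) by lia.
  rewrite !sum1_S. replace (K + 1 + 2 * (0 + c))%nat with (S (K + 2 * c)) by lia.
  replace (K + 2 + 2 * (0 + c))%nat with (S (S (K + 2 * c))) by lia. ring.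
Qed.

Lemma sum1_alt_vec K c m : (forall t, (t < c)%nat -> m <> (K + 1 + 2 * t)%nat) ->
  sum1 (alt_vec K c) m = 0.
Proof.
  intros Hm. unfold alt_vec. rewrite sum1_sum_cnt. apply sum_cnt_zero. intros t Ht.
  replace (K + 2 + 2 * t)%nat with (S (K + 1 + 2 * t)) by lia.
  rewrite sum1_adjacent by lia. specialize (Hm t ltac:(lia)). nat_cases; [contradiction|ring].
Qed.

Lemma alt_vec_out K c i : (i <= K \/ K + 2 * c < i)%nat -> alt_vec K c i = 0.
Proof. intros. apply sum_cnt_zero. intros. unfold ev. nat_cases; try lia; ring. Qed.

Lemma alt_vec_odd K c t : (t < c)%nat -> alt_vec K c (K + 1 + 2 * t)%nat = -1.
Proof.
  intros. unfold alt_vec.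
  rewrite (sum_cnt_single _ 0 c t) by (lia || (intros; unfold ev; nat_cases; lia || ring)).
  unfold ev. nat_cases; try lia; ring.
Qed.

Lemma alt_vec_even K c t : (t < c)%nat -> alt_vec K c (K + 2 + 2 * t)%nat = 1.
Proof.
  intros. unfold alt_vec.
  rewrite (sum_cnt_single _ 0 c t) by (lia || (intros; unfold ev; nat_cases; lia || ring)).
  unfold ev. nat_cases; try lia; ring.
Qed.

(** * The Kahan map is Poisson *)

Section KahanPoisson.
Variables (n : nat) (a : point) (eps : R) (x : point).
Hypothesis Hx : kdom n a eps x.
Local Notation D := (kden n a eps x).
Local Notation w := (wvec a x).

(** The log-gradient of [log K_i = log x_i + log D_0 + log D_n - log D_(i-1) - log D_i]. *)
Definition dlog_kahan i : point := fun m =>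
  ev i m - 2 * (eps / D (i - 1)) * w (i - 1) m - 2 * (eps / D i) * w i m
  + (- (eps / D 0) + eps / D n + eps / D (i - 1) + eps / D i) * w n m.

Lemma lg_kden y k : torus n y ->
  log_gradient n (fun z => kden n a eps z k) y (fun m => eps * (2 * wvec a y k m - wvec a y n m)).
Proof.
  intros Hy. unfold kden. eapply lg_ext.
  - apply lg_plus; [apply lg_minus; [apply lg_const|apply lg_scal, lg_Hf, Hy]|].
    apply lg_scal, lg_vv, Hy.
  - intros; cbv beta; ring.
Qed.

Lemma lg_kahan i : (1 <= i <= n)%nat ->
  log_gradient n (fun y => kahan n a eps y i) x (fun m => kahan n a eps x i * dlog_kahan i m).
Proof.
  intros Hi. assert (Ht : torus n x) by apply Hx.
  eapply lg_fext; [intros y; symmetry; apply kahan_eq, Hi|].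
  eapply lg_ext.
  - apply lg_div; [exact Ht| | |].
    + apply lg_mult; [apply lg_coord, Ht|apply lg_mult; apply lg_kden, Ht].
    + apply lg_mult; apply lg_kden, Ht.
    + apply Rmult_integral_contrapositive_currified; apply kden_nz; auto; lia.
  - intros m Hm. cbv beta. rewrite kahan_eq by exact Hi. unfold dlog_kahan.
    replace (w 0 m) with 0 by (unfold wvec; nat_cases; [lia|reflexivity]).
    pose proof (kden_nz n a eps x Hx (i - 1) ltac:(lia)). pose proof (kden_nz n a eps x Hx i ltac:(lia)).
    pose proof (kden_nz n a eps x Hx 0 ltac:(lia)). pose proof (kden_nz n a eps x Hx n ltac:(lia)).
    field. repeat split; auto.
Qed.

Lemma lbr_dlog_kahan i j : (1 <= i)%nat -> (i < j <= n)%nat ->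
  lbr n (dlog_kahan i) (dlog_kahan j) = 1.
Proof.
  intros Hi Hj. unfold dlog_kahan.
  rewrite !lbr_addl, !lbr_minusl, !lbr_scall, !lbr_addr, !lbr_minusr, !lbr_scalr.
  rewrite lbr_ev_ev, !lbr_ev_wvec, !lbr_wvec_ev by lia.
  rewrite (lbr_wvec_wvec n a x (i - 1) (j - 1)), (lbr_wvec_wvec n a x (i - 1) j),
    (lbr_wvec_wvec n a x (i - 1) n), (lbr_wvec_wvec n a x i (j - 1)), (lbr_wvec_wvec n a x i j),
    (lbr_wvec_wvec n a x i n), (lbr_wvec_wvec_rev n a x n (j - 1)), (lbr_wvec_wvec_rev n a x n j),
    lbr_self by lia.
  simpl_min.
  pose proof (kden_nz n a eps x Hx (i - 1) ltac:(lia)). pose proof (kden_nz n a eps x Hx i ltac:(lia)).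
  pose proof (kden_nz n a eps x Hx (j - 1) ltac:(lia)). pose proof (kden_nz n a eps x Hx j ltac:(lia)).
  pose proof (kden_nz n a eps x Hx 0 ltac:(lia)). pose proof (kden_nz n a eps x Hx n ltac:(lia)).
  unfold kden, Hf in *. cbn [vv sum1] in *. rewrite Rmult_0_r, Rplus_0_r in *.
  field. repeat split; auto.
Qed.

End KahanPoisson.

Lemma kahan_poisson_map n a eps : poisson_map n a eps.
Proof.
  intros x Hx i j Hi Hj.
  exists (fun m => kahan n a eps x i * dlog_kahan n a eps x i m / x m),
         (fun m => kahan n a eps x j * dlog_kahan n a eps x j m / x m).
  split; [|split]; [apply lg_kahan; auto; lia|apply lg_kahan; auto; lia|].
  rewrite (pbr_log n x (fun m => _ * _) (fun m => _ * _)) by apply Hx.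
  rewrite lbr_scall, lbr_scalr, lbr_dlog_kahan by (auto; lia). ring.
Qed.

(** * Involutivity and invariance of the Liouville family *)

Definition Jlg k (x : point) : point := fun m => - Jnf k x * alt_vec 0 k m.
Definition Flg n a K (x : point) : point :=
  fun m => Fprod n K x * wvec a x K m + Fnf n a K x * alt_vec K ((n - K) / 2) m.
Definition Clg M (x : point) : point := fun m => Cnf M x * (ev 1 m + alt_vec 1 M m).

Section LiouvilleGradients.
Variables (n : nat) (a x : point).
Hypothesis Hx : torus n x.

Lemma lg_Jnf k : (2 * k <= n)%nat -> log_gradient n (Jnf k) x (Jlg k x).
Proof.
  intros Hk. eapply lg_ext.
  { apply (lg_prod_ratio n x Hx (fun t => 2 * t + 1)%nat (fun t => 2 * t + 2)%nat). intros; lia. }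
  intros m _. unfold Jlg, alt_vec. fold (Jnf k x).
  rewrite <- Ropp_mult_distr_l, Ropp_mult_distr_r, <- sum_cnt_opp. f_equal.
  apply sum_cnt_ext. intros t _.
  replace (0 + 2 + 2 * t)%nat with (2 * t + 2)%nat by lia.
  replace (0 + 1 + 2 * t)%nat with (2 * t + 1)%nat by lia. ring.
Qed.

Lemma lg_Fnf K : (K <= n)%nat -> log_gradient n (Fnf n a K) x (Flg n a K x).
Proof.
  intros HK. eapply lg_ext.
  - apply lg_mult; [apply lg_vv, Hx|].
    apply (lg_prod_ratio n x Hx (fun t => K + 2 + 2 * t)%nat (fun t => K + 1 + 2 * t)%nat).
    intros t Ht. pose proof (Nat.Div0.mul_div_le (n - K) 2). lia.
  - intros m _. unfold Flg, Fnf, Fprod, alt_vec. ring.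
Qed.

Lemma lg_Cnf M : n = (2 * M + 1)%nat -> log_gradient n (Cnf M) x (Clg M x).
Proof.
  intros Hn. eapply lg_ext.
  - apply lg_mult; [apply lg_coord, Hx|].
    apply (lg_prod_ratio n x Hx (fun t => 2 * t + 3)%nat (fun t => 2 * t + 2)%nat). intros; lia.
  - intros m _. unfold Clg, Cnf, alt_vec.
    rewrite (sum_cnt_ext (fun t => ev (1 + 2 + 2 * t) m - _)
               (fun t => ev (2 * t + 3) m - ev (2 * t + 2) m)).
    + ring.
    + intros t _. f_equal; f_equal; lia.
Qed.

End LiouvilleGradients.

Section LiouvilleBrackets.
Variables (n : nat) (a x : point).

Lemma lbr_Jlg s k : (2 * k <= n)%nat -> lbr n s (Jlg k x) = - Jnf k x * sum1 s (2 * k).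
Proof.
  intros Hk. unfold Jlg. rewrite lbr_scalr, lbr_alt_vec by lia. rewrite Nat.add_0_l. cbn [sum1]. ring.
Qed.

Lemma lbr_Clg s M : n = (2 * M + 1)%nat -> lbr n s (Clg M x) = 0.
Proof.
  intros Hn. unfold Clg. rewrite lbr_scalr, lbr_addr, lbr_alt_vec by lia.
  rewrite lbr_anti, lbr_ev_l by lia. unfold lbr_weight. cbn [sum1 Nat.sub].
  replace (1 + 2 * M)%nat with n by lia. ring.
Qed.

Lemma lbr_Flg s K c : n = (K + 2 * c)%nat ->
  lbr n s (Flg n a K x) = Fprod n K x * lbr n s (wvec a x K) + Fnf n a K x * (sum1 s n - sum1 s K).
Proof.
  intros Hn. unfold Flg. rewrite (Fprod_count n K c Hn), lbr_addr, !lbr_scalr, lbr_alt_vec by lia.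
  rewrite <- Hn. reflexivity.
Qed.

Lemma sum1_Jlg k k' : sum1 (Jlg k' x) (2 * k) = 0.
Proof. unfold Jlg. rewrite sum1_scal, sum1_alt_vec by (intros; lia). ring. Qed.

Lemma sum1_Flg K c m : n = (K + 2 * c)%nat -> (forall t, m <> (K + 1 + 2 * t)%nat) ->
  sum1 (Flg n a K x) m = Fprod n K x * vv a x (Nat.min m K).
Proof.
  intros Hn Hm. unfold Flg. rewrite sum1_plus, !sum1_scal, sum1_wvec, sum1_alt_vec by (intros; apply Hm).
  ring.
Qed.

Lemma lbr_Jlg_Jlg k k' : (2 * k <= n)%nat -> lbr n (Jlg k' x) (Jlg k x) = 0.
Proof. intros. rewrite lbr_Jlg, sum1_Jlg by assumption. ring. Qed.

Lemma lbr_wvec_Jlg k : (2 * k <= n)%nat -> (forall i, (1 <= i <= 2 * k)%nat -> a i = 0) ->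
  lbr n (wvec a x n) (Jlg k x) = 0.
Proof. intros. rewrite lbr_Jlg, sum1_wvec, Nat.min_l, vv_zero by (auto; lia). ring. Qed.

Lemma lbr_Flg_Jlg k K c : n = (K + 2 * c)%nat -> (2 * k <= K)%nat ->
  (forall i, (1 <= i <= 2 * k)%nat -> a i = 0) -> lbr n (Flg n a K x) (Jlg k x) = 0.
Proof.
  intros Hn HkK Ha. rewrite lbr_Jlg, (sum1_Flg K c) by (intros; lia).
  rewrite Nat.min_l, vv_zero by (auto; lia). ring.
Qed.

Lemma lbr_wvec_Flg K c : n = (K + 2 * c)%nat -> lbr n (wvec a x n) (Flg n a K x) = 0.
Proof.
  intros Hn. rewrite (lbr_Flg _ K c Hn), lbr_wvec_wvec_rev, !sum1_wvec by lia.
  simpl_min. unfold Fnf. ring.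
Qed.

Lemma lbr_Flg_Flg K K' c c' : n = (K + 2 * c)%nat -> n = (K' + 2 * c')%nat -> (K < K')%nat ->
  lbr n (Flg n a K x) (Flg n a K' x) = 0.
Proof.
  intros Hn Hn' HK. rewrite (lbr_Flg _ K' c' Hn'), lbr_anti, (lbr_Flg _ K c Hn).
  rewrite lbr_wvec_wvec_rev, (sum1_Flg K c n), (sum1_Flg K c K'), !sum1_wvec by (intros; lia).
  simpl_min. unfold Fnf. ring.
Qed.

End LiouvilleBrackets.

Definition liouville_kind n a l (f : point -> R) : Prop :=
  (exists k, (1 <= k)%nat /\ (2 * k <= l)%nat /\ forall y, f y = Jnf k y) \/
  (forall y, f y = Hf n a y) \/
  (exists K c, (l < K)%nat /\ n = (K + 2 * c)%nat /\ forall y, f y = Fnf n a K y) \/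
  (exists M, n = (2 * M + 1)%nat /\ forall y, f y = Cnf M y).

Definition liouville_lg n a l x (s : point) : Prop :=
  (exists k, (1 <= k)%nat /\ (2 * k <= l)%nat /\ s = Jlg k x) \/
  s = wvec a x n \/
  (exists K c, (l < K)%nat /\ n = (K + 2 * c)%nat /\ s = Flg n a K x) \/
  (exists M, n = (2 * M + 1)%nat /\ s = Clg M x).

Lemma in_liouville_list n a l f : (l < n)%nat -> In f (liouville_list n a l) -> liouville_kind n a l f.
Proof.
  intros Hl Hin. unfold liouville_list in Hin. pose proof (half_spec l).
  destruct (parity_cases n) as [(E & Hn)|(E & Hn & Hh)]; rewrite E in Hin; try rewrite Hh in Hin;
    apply in_app_or in Hin as [Hin|Hin];
    try (left; apply in_map_iff in Hin as (k & <- & Hk); apply in_seq in Hk;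
         exists k; repeat split; [lia|lia|intros; apply Jf_Jnf]);
    cbn [app In] in Hin; (destruct Hin as [<-|Hin]; [right; left; reflexivity|]).
  - apply in_map_iff in Hin as (k & <- & Hk). apply in_seq in Hk.
    right; right; left. exists (2 * k)%nat, (n / 2 - k)%nat. repeat split; [lia|lia|].
    intros. apply (Fev_Fnf n a (n / 2)); lia.
  - apply in_app_or in Hin as [Hin|[<-|[]]].
    + apply in_map_iff in Hin as (k & <- & Hk). apply in_seq in Hk.
      right; right; left. exists (2 * k - 1)%nat, (n / 2 + 1 - k)%nat. repeat split; [lia|lia|].
      intros. apply (Fod_Fnf n a (n / 2)); lia.
    + right; right; right. exists (n / 2)%nat. split; [exact Hn|]. intros; apply Cf_Cnf, Hn.
Qed.

Lemma liouville_kind_lg n a l x f : torus n x -> (l < n)%nat -> liouville_kind n a l f ->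
  exists s, log_gradient n f x s /\ liouville_lg n a l x s.
Proof.
  intros Hx Hl [(k & ? & ? & E)|[E|[(K & c & ? & ? & E)|(M & ? & E)]]].
  - exists (Jlg k x). split; [|left; exists k; auto].
    eapply lg_fext; [intros; symmetry; apply E|apply lg_Jnf; auto; lia].
  - exists (wvec a x n). split; [|right; left; reflexivity].
    eapply lg_fext; [intros; symmetry; apply E|apply lg_Hf, Hx].
  - exists (Flg n a K x). split; [|right; right; left; exists K, c; auto].
    eapply lg_fext; [intros; symmetry; apply E|apply lg_Fnf; auto; lia].
  - exists (Clg M x). split; [|right; right; right; exists M; auto].
    eapply lg_fext; [intros; symmetry; apply E|apply lg_Cnf; auto].
Qed.

Lemma liouville_lg_involutive n a l x s t : (l < n)%nat ->
  (forall i, (1 <= i <= l)%nat -> a i = 0) ->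
  liouville_lg n a l x s -> liouville_lg n a l x t -> lbr n s t = 0.
Proof.
  intros Hl Ha Hs Ht.
  destruct Ht as [(k & ? & ? & ->)|[->|[(K' & c' & ? & ? & ->)|(M & ? & ->)]]];
    [| | |apply lbr_Clg; assumption];
  destruct Hs as [(k' & ? & ? & ->)|[->|[(K & c & ? & ? & ->)|(M & ? & ->)]]];
    try (rewrite lbr_anti, lbr_Clg by assumption; ring); try apply lbr_self.
  - apply lbr_Jlg_Jlg; lia.
  - apply lbr_wvec_Jlg; [lia|intros; apply Ha; lia].
  - apply (lbr_Flg_Jlg n a x k K c); [assumption|lia|intros; apply Ha; lia].
  - rewrite lbr_anti, lbr_wvec_Jlg; [ring|lia|intros; apply Ha; lia].
  - rewrite lbr_anti, (lbr_wvec_Flg n a x K c) by assumption. ring.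
  - rewrite lbr_anti, (lbr_Flg_Jlg n a x k' K' c'); [ring|assumption|lia|intros; apply Ha; lia].
  - apply (lbr_wvec_Flg n a x K' c'); assumption.
  - destruct (Nat.lt_total K K') as [HK|[<-|HK]].
    + apply (lbr_Flg_Flg n a x K K' c c'); assumption.
    + apply lbr_self.
    + rewrite lbr_anti, (lbr_Flg_Flg n a x K' K c' c) by assumption. ring.
Qed.

Lemma liouville_involutive n a l : (l < n)%nat -> (forall i, (1 <= i <= l)%nat -> a i = 0) ->
  involutive n (torus n) (liouville_list n a l).
Proof.
  intros Hl Ha f g Hf Hg x Hx.
  destruct (liouville_kind_lg n a l x f Hx Hl (in_liouville_list n a l f Hl Hf)) as (s & Hs & Ks).
  destruct (liouville_kind_lg n a l x g Hx Hl (in_liouville_list n a l g Hl Hg)) as (t & Ht & Kt).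
  exists (fun i => s i / x i), (fun i => t i / x i). repeat split; [exact Hs|exact Ht|].
  rewrite pbr_log by exact Hx. apply (liouville_lg_involutive n a l x); assumption.
Qed.

Lemma liouville_invariant n a l eps : (l < n)%nat -> (forall i, (1 <= i <= l)%nat -> a i = 0) ->
  Forall (invariant n a eps) (liouville_list n a l).
Proof.
  intros Hl Ha. apply Forall_forall. intros f Hf x Hx.
  destruct (in_liouville_list n a l f Hl Hf) as [(k & ? & ? & E)|[E|[(K & c & ? & ? & E)|(M & ? & E)]]];
    rewrite !E.
  - apply Jnf_kahan; auto; [lia|intros; apply Ha; lia].
  - apply Hf_kahan, Hx.
  - apply (Fnf_kahan n a eps x Hx K c); assumption.
  - apply Cnf_kahan; assumption.
Qed.

(** * Functional independence *)

Definition dot n (u v : point) : R := sum1 (fun i => u i * v i) n.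

Lemma dot_ev n j v : (1 <= j <= n)%nat -> dot n (ev j) v = v j.
Proof. apply sum1_ev. Qed.

Lemma sum1_fold_swap (z c : nat -> R) (g : nat -> point) (L : list nat) n :
  sum1 (fun i => z i * fold_right Rplus 0 (map (fun k => c k * g k i) L)) n =
  fold_right Rplus 0 (map (fun k => c k * sum1 (fun i => z i * g k i) n) L).
Proof.
  induction L as [|k L IH]; simpl.
  - apply sum1_zero; intros; ring.
  - rewrite <- IH, <- sum1_scal, <- sum1_plus. apply sum1_ext; intros; ring.
Qed.

Lemma fold_sum_zero (f : nat -> R) (L : list nat) :
  (forall k, In k L -> f k = 0) -> fold_right Rplus 0 (map f L) = 0.
Proof.
  induction L as [|k L IH]; intros H; simpl; [reflexivity|].
  rewrite H, IH; [ring|intros; apply H; right; assumption|left; reflexivity].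
Qed.

Lemma fold_sum_single (f : nat -> R) (L : list nat) k0 : In k0 L -> NoDup L ->
  (forall k, In k L -> k <> k0 -> f k = 0) -> fold_right Rplus 0 (map f L) = f k0.
Proof.
  induction L as [|k L IH]; intros Hin Hnd H; [destruct Hin|].
  inversion Hnd as [|? ? Hk HL]; subst. simpl. destruct Hin as [<-|Hin].
  - rewrite fold_sum_zero; [ring|]. intros k' Hk'. apply H; [right; assumption|congruence].
  - rewrite H, IH; [ring|assumption|assumption| |left; reflexivity|congruence].
    intros k' Hk' Hne. apply H; [right|]; assumption.
Qed.

Lemma lin_indep_triangular n (dfs : list point) (z : nat -> point) (rho : nat -> nat) :
  (forall b b', (b < length dfs)%nat -> (b' < length dfs)%nat -> b <> b' -> (rho b <= rho b')%nat ->
     dot n (z b) (nth b' dfs (fun _ => 0)) = 0) ->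
  (forall b, (b < length dfs)%nat -> dot n (z b) (nth b dfs (fun _ => 0)) <> 0) ->
  lin_indep n dfs.
Proof.
  intros Hoff Hdiag c Hc.
  assert (Hrow : forall b, (b < length dfs)%nat ->
    fold_right Rplus 0 (map (fun k => c k * dot n (z b) (nth k dfs (fun _ => 0)))
      (seq 0 (length dfs))) = 0).
  { intros b Hb. unfold dot. rewrite <- sum1_fold_swap. apply sum1_zero. intros i Hi.
    rewrite Hc by exact Hi. ring. }
  assert (Hrank : forall N b, (b < length dfs)%nat -> (rho b < N)%nat -> c b = 0).
  { induction N as [|N IH]; intros b Hb HN; [lia|].
    specialize (Hrow b Hb). rewrite (fold_sum_single _ _ b) in Hrow.
    - apply Rmult_integral in Hrow as [|E]; [assumption|]. exfalso; exact (Hdiag b Hb E).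
    - apply in_seq; lia.
    - apply seq_NoDup.
    - intros k Hk Hne. apply in_seq in Hk.
      destruct (Nat.le_gt_cases (rho b) (rho k)).
      + rewrite Hoff by (auto; lia). ring.
      + rewrite (IH k) by lia. ring. }
  intros k Hk. exact (Hrank (S (rho k)) k Hk (Nat.lt_succ_diag_r _)).
Qed.

Lemma Forall2_map_seq {A B} (P : A -> B -> Prop) (l : list A) (g : nat -> B) d :
  (forall b, (b < length l)%nat -> P (nth b l d) (g b)) -> Forall2 P l (map g (seq 0 (length l))).
Proof.
  revert g; induction l as [|f l IH]; intros g H; simpl; constructor.
  - apply (H 0%nat); simpl; lia.
  - rewrite <- seq_shift, map_map. apply IH. intros b Hb. apply (H (S b)). simpl; lia.
Qed.

Lemma nth_map_seq {A} (f : nat -> A) s len b d : (b < len)%nat ->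
  nth b (map f (seq s len)) d = f (s + b)%nat.
Proof.
  intros. rewrite nth_indep with (d' := f 0%nat) by (rewrite length_map, length_seq; assumption).
  rewrite map_nth, seq_nth by assumption. reflexivity.
Qed.

Lemma indep_at_triangular n x (fs : list (point -> R)) (V z : nat -> point) (rho : nat -> nat) :
  torus n x ->
  (forall b, (b < length fs)%nat -> log_gradient n (nth b fs (fun _ => 0)) x (V b)) ->
  (forall b b', (b < length fs)%nat -> (b' < length fs)%nat -> b <> b' -> (rho b <= rho b')%nat ->
     dot n (z b) (V b') = 0) ->
  (forall b, (b < length fs)%nat -> dot n (z b) (V b) <> 0) ->
  indep_at n fs x.
Proof.
  intros Hx Hlg Hoff Hdiag.
  assert (Hdot : forall b b', dot n (fun i => z b i * x i) (fun i => V b' i / x i) = dot n (z b) (V b')).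
  { intros. apply sum1_ext. intros i Hi. field. apply Hx, Hi. }
  exists (map (fun b i => V b i / x i) (seq 0 (length fs))). split.
  - apply (Forall2_map_seq _ _ _ (fun _ => 0)), Hlg.
  - apply (lin_indep_triangular n _ (fun b i => z b i * x i) rho);
      rewrite length_map, length_seq; intros; rewrite nth_map_seq, Hdot by assumption; auto.
Qed.

Lemma exists_avoiding (L : list R) p q : p < q -> exists s, p < s < q /\ ~ In s L.
Proof.
  revert p q; induction L as [|b L IH]; intros p q Hpq.
  - exists ((p + q) / 2). split; [lra|auto].
  - destruct (Rle_lt_dec b p) as [Hb|Hb].
    + destruct (IH p q Hpq) as (s & Hs & Hn). exists s. split; [exact Hs|]. intros [E|E]; [lra|auto].
    + destruct (IH p (Rmin b q)) as (s & Hs & Hn); [unfold Rmin; destruct (Rle_dec b q); lra|].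
      exists s. unfold Rmin in Hs. destruct (Rle_dec b q); (split; [lra|intros [E|E]; [lra|auto]]).
Qed.

Lemma perturb_coord n (y : point) c beta delta (L : list (point -> R)) :
  torus n y -> (1 <= c <= n)%nat -> beta <> 0 -> 0 < delta ->
  (forall f, In f L -> forall t, f (upd y c t) = f y + beta * (t - y c)) ->
  exists t, Rabs (t - y c) < delta /\ torus n (upd y c t) /\ forall f, In f L -> f (upd y c t) <> 0.
Proof.
  intros Hy Hc Hb Hd Haff.
  destruct (exists_avoiding (0 :: map (fun f => y c - f y / beta) L) (y c - delta) (y c + delta))
    as (t & Ht & Hn); [lra|].
  exists t. split; [apply Rabs_def1; lra|split].
  - intros i Hi. unfold upd. destruct (Nat.eqb_spec i c); [intros E; apply Hn; left; auto|apply Hy, Hi].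
  - intros f Hf E. apply Hn. right. apply in_map_iff. exists f. split; [|exact Hf].
    rewrite Haff in E by exact Hf. field_simplify; [|exact Hb].
    apply (Rmult_eq_reg_r beta); [|exact Hb]. field_simplify; [lra|exact Hb].
Qed.

Lemma upd_close (y : point) c t i : Rabs (upd y c t i - y i) <= Rabs (t - y c).
Proof.
  unfold upd. destruct (Nat.eqb_spec i c) as [->|]; [lra|].
  rewrite Rminus_diag, Rabs_R0. apply Rabs_pos.
Qed.

Lemma perturb_vv_nonzero n a l (y : point) delta : torus n y -> (S l <= n)%nat -> a (S l) <> 0 ->
  0 < delta ->
  exists x, torus n x /\ (forall i, (1 <= i <= n)%nat -> Rabs (x i - y i) < delta) /\
    (forall j, (S l <= j <= n)%nat -> vv a x j <> 0) /\
    (forall s, (S l <= s <= n)%nat -> Hf n a x - vv a x s = Hf n a y - vv a y s).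
Proof.
  intros Hy Hl Hal Hd.
  destruct (perturb_coord n y (S l) (a (S l)) delta (map (fun j z => vv a z j) (seq (S l) (n - l))))
    as (t & Ht & Hyt & Hv); [exact Hy|lia|exact Hal|exact Hd| |].
  { intros f Hf t. apply in_map_iff in Hf as (j & <- & Hj). apply in_seq in Hj.
    rewrite vv_upd by lia. nat_cases; [ring|lia]. }
  exists (upd y (S l) t). repeat split.
  - exact Hyt.
  - intros i _. eapply Rle_lt_trans; [apply upd_close|exact Ht].
  - intros j Hj. apply (Hv (fun z => vv a z j)), in_map_iff. exists j. split; [reflexivity|].
    apply in_seq. lia.
  - intros s' Hs. unfold Hf. rewrite !vv_upd by lia. nat_cases; try lia. ring.
Qed.

Lemma perturb_tail_nonzero n a l r (y : point) delta : torus n y -> (S l <= r <= n)%nat -> a r <> 0 ->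
  0 < delta ->
  exists x, torus n x /\ (forall i, (1 <= i <= n)%nat -> Rabs (x i - y i) < delta) /\
    (forall s, (S l <= s < r)%nat -> Hf n a x - vv a x s <> 0).
Proof.
  intros Hy Hr Har Hd.
  destruct (perturb_coord n y r (a r) delta (map (fun s z => Hf n a z - vv a z s) (seq (S l) (r - S l))))
    as (t & Ht & Hyt & Hu); [exact Hy|lia|exact Har|exact Hd| |].
  { intros f Hf t. apply in_map_iff in Hf as (s & <- & Hs). apply in_seq in Hs.
    unfold Hf. rewrite !vv_upd by lia. nat_cases; try lia. ring. }
  exists (upd y r t). repeat split.
  - exact Hyt.
  - intros i _. eapply Rle_lt_trans; [apply upd_close|exact Ht].
  - intros s Hs. apply (Hu (fun z => Hf n a z - vv a z s)), in_map_iff. exists s. split; [reflexivity|].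
    apply in_seq. lia.
Qed.

Definition test_vec (a x : point) p q : point :=
  fun i => a q * x q * ev p i - a p * x p * ev q i.

Lemma dot_test_vec n a x p q v : (1 <= p <= n)%nat -> (1 <= q <= n)%nat ->
  dot n (test_vec a x p q) v = a q * x q * v p - a p * x p * v q.
Proof.
  intros. unfold dot, test_vec.
  rewrite (sum1_ext _ (fun i => a q * x q * (ev p i * v i) - a p * x p * (ev q i * v i)))
    by (intros; ring).
  rewrite sum1_minus, !sum1_scal, !sum1_ev by assumption. reflexivity.
Qed.

Lemma prod_ratio_nz n x (p q : nat -> nat) lo c : torus n x ->
  (forall t, (lo <= t < lo + c)%nat -> (1 <= p t <= n)%nat /\ (1 <= q t <= n)%nat) ->
  prod_cnt (fun t => x (p t) / x (q t)) lo c <> 0.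
Proof.
  intros Hx H. apply prod_cnt_nz. intros t Ht. destruct (H t Ht).
  apply Rmult_integral_contrapositive_currified; [|apply Rinv_neq_0_compat]; apply Hx; assumption.
Qed.

Section LiouvilleVectors.
Variables (n : nat) (a x : point).
Hypothesis Hx : torus n x.

Lemma Jnf_nz k : (2 * k <= n)%nat -> Jnf k x <> 0.
Proof. intros. apply (prod_ratio_nz n); [exact Hx|intros; lia]. Qed.

Lemma Fprod_nz K : (K <= n)%nat -> Fprod n K x <> 0.
Proof.
  intros. apply (prod_ratio_nz n); [exact Hx|]. intros t Ht.
  pose proof (Nat.Div0.mul_div_le (n - K) 2). lia.
Qed.

Lemma Cnf_nz M : n = (2 * M + 1)%nat -> Cnf M x <> 0.
Proof.
  intros. apply Rmult_integral_contrapositive_currified; [apply Hx; lia|].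
  apply (prod_ratio_nz n); [exact Hx|intros; lia].
Qed.

Lemma Jlg_high k i : (2 * k < i)%nat -> Jlg k x i = 0.
Proof. intros. unfold Jlg. rewrite alt_vec_out by lia. ring. Qed.

Lemma Jlg_top k : (1 <= k)%nat -> Jlg k x (2 * k)%nat = - Jnf k x.
Proof.
  intros. unfold Jlg. replace (2 * k)%nat with (0 + 2 + 2 * (k - 1))%nat by lia.
  rewrite alt_vec_even by lia. ring.
Qed.

Lemma Flg_low K i : (i <= K)%nat -> Flg n a K x i = Fprod n K x * (a i * x i).
Proof. intros. unfold Flg. rewrite wvec_in, alt_vec_out by lia. ring. Qed.

Lemma Flg_next K c : n = (K + 2 * c)%nat -> (1 <= c)%nat -> Flg n a K x (S K) = - Fnf n a K x.
Proof.
  intros Hn Hc. unfold Flg. rewrite (Fprod_count n K c Hn).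
  replace (S K) with (K + 1 + 2 * 0)%nat by lia. rewrite alt_vec_odd by lia.
  unfold wvec. nat_cases; [lia|ring].
Qed.

Lemma Clg_adjacent M q : n = (2 * M + 1)%nat -> (1 <= q)%nat -> (S q <= n)%nat ->
  Clg M x (S q) = - Clg M x q /\ (Clg M x q = Cnf M x \/ Clg M x q = - Cnf M x).
Proof.
  intros Hn Hq HqS. unfold Clg. destruct (Nat.Even_or_Odd q) as [[t ->]|[t ->]].
  - replace (2 * t)%nat with (1 + 1 + 2 * (t - 1))%nat by lia.
    replace (S (1 + 1 + 2 * (t - 1))) with (1 + 2 + 2 * (t - 1))%nat by lia.
    rewrite alt_vec_odd, alt_vec_even by lia. unfold ev. nat_cases; try lia. split; [ring|right; ring].
  - destruct (Nat.eq_dec t 0) as [->|Ht].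
    + replace (S (2 * 0 + 1)) with (1 + 1 + 2 * 0)%nat by lia.
      rewrite alt_vec_odd, alt_vec_out by lia. unfold ev. nat_cases; try lia. split; [ring|left; ring].
    + replace (2 * t + 1)%nat with (1 + 2 + 2 * (t - 1))%nat by lia.
      replace (S (1 + 2 + 2 * (t - 1))) with (1 + 1 + 2 * t)%nat by lia.
      rewrite alt_vec_odd, alt_vec_even by lia. unfold ev. nat_cases; try lia. split; [ring|left; ring].
Qed.

Lemma dot_test_Flg p K c : n = (K + 2 * c)%nat -> (1 <= c)%nat -> (1 <= p <= K)%nat ->
  dot n (test_vec a x p (S K)) (Flg n a K x) = a p * x p * Fprod n K x * vv a x (S K).
Proof.
  intros Hn Hc Hp. rewrite dot_test_vec, Flg_low, (Flg_next K c) by (auto; lia).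
  unfold Fnf. rewrite vv_S. ring.
Qed.

Lemma dot_test_Clg M q : n = (2 * M + 1)%nat -> (1 <= q)%nat -> (S q <= n)%nat ->
  dot n (test_vec a x q (S q)) (Clg M x) = Clg M x q * (a q * x q + a (S q) * x (S q)).
Proof.
  intros Hn Hq HqS. rewrite dot_test_vec by lia. rewrite (proj1 (Clg_adjacent M q Hn Hq HqS)). ring.
Qed.

End LiouvilleVectors.

(** Position [b] of [liouville_list]: [J_(b+1)] for [b < l/2], then [H], then the [F]'s
    (the one at position [b] having [n/2 - b] ratios), then [C] if [n] is odd. *)
Definition liouville_at n a l b : point -> R :=
  if Nat.ltb b (l / 2) then Jnf (S b)
  else if Nat.eqb b (l / 2) then Hf n a
  else if Nat.ltb b (n / 2) then Fnf n a (n - 2 * (n / 2 - b))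
  else Cnf (n / 2).

Lemma nth_app_map_seq_l {A} (f : nat -> A) s len rest b d : (b < len)%nat ->
  nth b (map f (seq s len) ++ rest) d = f (s + b)%nat.
Proof.
  intros. rewrite app_nth1 by (rewrite length_map, length_seq; assumption).
  apply nth_map_seq; assumption.
Qed.

Lemma nth_app_map_seq_r {A} (f : nat -> A) s len rest b d : (len <= b)%nat ->
  nth b (map f (seq s len) ++ rest) d = nth (b - len) rest d.
Proof. intros. rewrite app_nth2; rewrite length_map, length_seq; [reflexivity|assumption]. Qed.

Lemma liouville_list_spec n a l : (l < n)%nat -> ~ (Nat.odd n = true /\ l = (n - 1)%nat) ->
  length (liouville_list n a l) = (n - n / 2)%nat /\
  forall b, (b < n - n / 2)%nat -> forall y,
    nth b (liouville_list n a l) (fun _ => 0) y = liouville_at n a l b y.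
Proof.
  intros Hl Hodd. pose proof (half_spec l). unfold liouville_list, liouville_at.
  destruct (parity_cases n) as [(E & Hn)|(E & Hn & Hh)]; rewrite E; [|rewrite Hh].
  - split.
    { rewrite length_app, length_map, length_seq. cbn [length app].
      rewrite length_map, length_seq. lia. }
    intros b Hb y. nat_cases; try lia.
    + rewrite nth_app_map_seq_l by lia. apply Jf_Jnf.
    + subst b. rewrite nth_app_map_seq_r, Nat.sub_diag by lia. reflexivity.
    + rewrite nth_app_map_seq_r by lia. replace (b - l / 2)%nat with (S (b - S (l / 2))) by lia.
      cbn [app nth]. rewrite nth_map_seq by lia. rewrite (Fev_Fnf n a (n / 2)) by lia. f_equal. lia.
  - assert (Hl2 : (S l < n)%nat) by (destruct (Nat.eq_dec l (n - 1)); [|lia];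
      exfalso; apply Hodd; unfold Nat.odd; rewrite E; auto).
    split.
    { rewrite length_app, length_map, length_seq. cbn [length app].
      rewrite length_app, length_map, length_seq. cbn [length]. lia. }
    intros b Hb y. nat_cases; try lia.
    + rewrite nth_app_map_seq_l by lia. apply Jf_Jnf.
    + subst b. rewrite nth_app_map_seq_r, Nat.sub_diag by lia. reflexivity.
    + rewrite nth_app_map_seq_r by lia. replace (b - l / 2)%nat with (S (b - S (l / 2))) by lia.
      cbn [app nth]. rewrite nth_app_map_seq_l by lia.
      rewrite (Fod_Fnf n a (n / 2)) by lia. f_equal. lia.
    + rewrite nth_app_map_seq_r by lia. replace (b - l / 2)%nat with (S (b - S (l / 2))) by lia.
      cbn [app nth]. rewrite nth_app_map_seq_r by lia. replace (b - S (l / 2) - _)%nat with 0%nat by lia.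
      apply (Cf_Cnf n (n / 2)), Hn.
Qed.

Section LiouvilleIndependence.
Variables (n : nat) (a : point) (l : nat) (x : point).
Hypothesis Hl : (l < n)%nat.
Hypothesis Hodd : ~ (Nat.odd n = true /\ l = (n - 1)%nat).
Hypothesis Ha : forall i, (1 <= i <= l)%nat -> a i = 0.
Hypothesis Hal : a (S l) <> 0.
Hypothesis Hx : torus n x.
Hypothesis Hv : forall j, (S l <= j <= n)%nat -> vv a x j <> 0.

Definition liouville_vec b : point :=
  if Nat.ltb b (l / 2) then Jlg (S b) x
  else if Nat.eqb b (l / 2) then wvec a x n
  else if Nat.ltb b (n / 2) then Flg n a (n - 2 * (n / 2 - b)) x
  else Clg (n / 2) x.

Definition liouville_test b : point :=
  if Nat.ltb b (l / 2) then ev (2 * S b)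
  else if Nat.eqb b (l / 2) then ev (S l)
  else if Nat.ltb b (n / 2) then test_vec a x (S l) (S (n - 2 * (n / 2 - b)))
  else test_vec a x (S l) (S (S l)).

Definition liouville_rank b : nat :=
  if Nat.ltb b (l / 2) then (2 * n + l / 2 - b)%nat
  else if Nat.eqb b (l / 2) then (2 * n)%nat
  else if Nat.ltb b (n / 2) then b
  else 0%nat.

Lemma liouville_parity : n = (2 * (n / 2))%nat \/ (n = 2 * (n / 2) + 1 /\ S (S l) <= n)%nat.
Proof.
  destruct (parity_cases n) as [(_ & Hn)|(E & Hn & _)]; [left; exact Hn|right; split; [exact Hn|]].
  destruct (Nat.eq_dec l (n - 1)); [|lia]. exfalso. apply Hodd. unfold Nat.odd. rewrite E. auto.
Qed.

Lemma lg_liouville_at b : (b < n - n / 2)%nat ->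
  log_gradient n (liouville_at n a l b) x (liouville_vec b).
Proof.
  intros Hb. pose proof liouville_parity. pose proof (half_spec l).
  unfold liouville_at, liouville_vec. nat_cases; try lia.
  - apply lg_Jnf; [exact Hx|lia].
  - apply lg_Hf, Hx.
  - apply lg_Fnf; [exact Hx|lia].
  - apply lg_Cnf; [exact Hx|lia].
Qed.

Lemma liouville_test_offdiag b b' : b <> b' -> (liouville_rank b <= liouville_rank b')%nat ->
  (b < n - n / 2)%nat -> (b' < n - n / 2)%nat -> dot n (liouville_test b) (liouville_vec b') = 0.
Proof.
  intros Hne. pose proof liouville_parity. pose proof (half_spec l).
  unfold liouville_test, liouville_vec, liouville_rank. nat_cases; intros; try lia.
  all: rewrite ?dot_ev, ?dot_test_vec by lia.
  all: rewrite ?Jlg_high, ?Flg_low, ?wvec_in by lia; ring.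
Qed.

Lemma liouville_test_diag b : (b < n - n / 2)%nat -> dot n (liouville_test b) (liouville_vec b) <> 0.
Proof.
  intros Hb. pose proof liouville_parity. pose proof (half_spec l).
  assert (Hw : a (S l) * x (S l) <> 0)
    by (apply Rmult_integral_contrapositive_currified; [exact Hal|apply Hx; lia]).
  unfold liouville_test, liouville_vec. nat_cases; try lia.
  - rewrite dot_ev, Jlg_top by lia. apply Ropp_neq_0_compat, (Jnf_nz n); [exact Hx|lia].
  - rewrite dot_ev, wvec_in by lia. exact Hw.
  - rewrite (dot_test_Flg n a x (S l) _ (n / 2 - b)) by lia.
    apply Rmult_integral_contrapositive_currified; [|apply Hv; lia].
    apply Rmult_integral_contrapositive_currified; [exact Hw|apply Fprod_nz; [exact Hx|lia]].
  - rewrite (dot_test_Clg n a x (n / 2) (S l)) by lia.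
    replace (a (S l) * x (S l) + a (S (S l)) * x (S (S l))) with (vv a x (S (S l)))
      by (rewrite !vv_S, vv_zero by exact Ha; ring).
    apply Rmult_integral_contrapositive_currified; [|apply Hv; lia].
    destruct (Clg_adjacent n x (n / 2) (S l)) as [_ [-> | ->]]; try lia;
      [|apply Ropp_neq_0_compat]; apply (Cnf_nz n); [exact Hx|lia|exact Hx|lia].
Qed.

Lemma liouville_indep_at : indep_at n (liouville_list n a l) x.
Proof.
  destruct (liouville_list_spec n a l Hl Hodd) as [Hlen Hnth].
  apply (indep_at_triangular n x _ liouville_vec liouville_test liouville_rank Hx); rewrite Hlen.
  - intros b Hb. eapply lg_fext; [intros y; symmetry; apply Hnth, Hb|apply lg_liouville_at, Hb].
  - intros. apply liouville_test_offdiag; assumption.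
  - apply liouville_test_diag.
Qed.

End LiouvilleIndependence.

Lemma liouville_func_indep n a l : (l < n)%nat -> (forall i, (1 <= i <= l)%nat -> a i = 0) ->
  a (S l) <> 0 -> ~ (Nat.odd n = true /\ l = (n - 1)%nat) ->
  func_indep n (torus n) (liouville_list n a l).
Proof.
  intros Hl Ha Hal Hodd y Hy delta Hd.
  destruct (perturb_vv_nonzero n a l y delta Hy Hl Hal Hd) as (x & Hx & Hclose & Hv & _).
  exists x. split; [exact Hx|split; [exact Hclose|]].
  apply liouville_indep_at; assumption.
Qed.

(** * Superintegrability *)

Lemma first_integral_lbr n a x s : torus n x ->
  sum1 (fun i => s i / x i * vfield n a x i) n = lbr n s (wvec a x n).
Proof.
  intros Hx. rewrite lbr_expand. apply sum1_ext. intros i Hi. unfold vfield.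
  rewrite lbr_weight_wvec by lia. simpl_min. field. apply Hx, Hi.
Qed.

Definition super_ratio s (y : point) : R := y s / y (S s).
Definition super_left n a l (y : point) : R := y l * (Hf n a y - vv a y (S l)) / y (S l).
Definition super_mid n a s (y : point) : R := (Hf n a y - vv a y (s - 1)) * vv a y s / y s.
Definition super_right a r (y : point) : R := y (S r) * vv a y (r - 1) / y r.
Definition super_corner l r (y : point) : R := y l * y (S r).

Definition super_ratio_lg s (x : point) : point := fun i => x s / x (S s) * (ev s i - ev (S s) i).
Definition super_left_lg n a l (x : point) : point := fun i =>
  super_left n a l x * (ev l i - ev (S l) i) + x l / x (S l) * (wvec a x n i - wvec a x (S l) i).
Definition super_mid_lg n a s (x : point) : point := fun i =>
  / x s * ((Hf n a x - vv a x (s - 1)) * wvec a x s i + vv a x s * (wvec a x n i - wvec a x (s - 1) i))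
  - super_mid n a s x * ev s i.
Definition super_right_lg a r (x : point) : point := fun i =>
  super_right a r x * (ev (S r) i - ev r i) + x (S r) / x r * wvec a x (r - 1) i.
Definition super_corner_lg l r (x : point) : point :=
  fun i => super_corner l r x * (ev l i + ev (S r) i).

Section SuperGradients.
Variables (n : nat) (a x : point).
Hypothesis Hx : torus n x.

Lemma lg_super_ratio s : (S s <= n)%nat -> log_gradient n (super_ratio s) x (super_ratio_lg s x).
Proof. intros. apply lg_ratio; [exact Hx|lia]. Qed.

Lemma lg_super_left l : (S l <= n)%nat -> log_gradient n (super_left n a l) x (super_left_lg n a l x).
Proof.
  intros. eapply lg_ext.
  - apply lg_div; [exact Hx| | |apply Hx; lia].
    + apply lg_mult; [apply lg_coord, Hx|apply lg_minus; [apply lg_Hf|apply lg_vv]; exact Hx].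
    + apply lg_coord, Hx.
  - intros i _. unfold super_left_lg, super_left. cbv beta. field. apply Hx; lia.
Qed.

Lemma lg_super_mid s : (1 <= s <= n)%nat -> log_gradient n (super_mid n a s) x (super_mid_lg n a s x).
Proof.
  intros. eapply lg_ext.
  - apply lg_div; [exact Hx| | |apply Hx; lia].
    + apply lg_mult; [apply lg_minus; [apply lg_Hf|apply lg_vv]|apply lg_vv]; exact Hx.
    + apply lg_coord, Hx.
  - intros i _. unfold super_mid_lg, super_mid. cbv beta. field. apply Hx; lia.
Qed.

Lemma lg_super_right r : (1 <= r <= n)%nat -> log_gradient n (super_right a r) x (super_right_lg a r x).
Proof.
  intros. eapply lg_ext.
  - apply lg_div; [exact Hx| | |apply Hx; lia].
    + apply lg_mult; [apply lg_coord|apply lg_vv]; exact Hx.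
    + apply lg_coord, Hx.
  - intros i _. unfold super_right_lg, super_right. cbv beta. field. apply Hx; lia.
Qed.

Lemma lg_super_corner l r : log_gradient n (super_corner l r) x (super_corner_lg l r x).
Proof.
  eapply lg_ext; [apply lg_mult; apply lg_coord, Hx|].
  intros i _. unfold super_corner_lg, super_corner. ring.
Qed.

End SuperGradients.

Section SuperFirstIntegrals.
Variables (n : nat) (a x : point).
Local Notation w := (wvec a x n).

Lemma lbr_super_ratio_H s : (1 <= s)%nat -> (S s <= n)%nat -> a s = 0 -> a (S s) = 0 ->
  lbr n (super_ratio_lg s x) w = 0.
Proof.
  intros Hs HSs Ha HaS. unfold super_ratio_lg. rewrite lbr_scall, lbr_minusl, !lbr_ev_wvec by lia.
  assert (E : vv a x s = vv a x (s - 1)).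
  { replace s with (S (s - 1)) at 1 by lia. rewrite vv_S. replace (S (s - 1)) with s by lia.
    rewrite Ha. ring. }
  simpl_min. rewrite Nat.sub_succ, Nat.sub_0_r, vv_S, HaS, E. ring.
Qed.

Lemma lbr_super_left_H l : (1 <= l)%nat -> (S l <= n)%nat -> (forall i, (1 <= i <= l)%nat -> a i = 0) ->
  lbr n (super_left_lg n a l x) w = 0.
Proof.
  intros Hl HSl Ha. unfold super_left_lg.
  rewrite lbr_addl, !lbr_scall, !lbr_minusl, !lbr_ev_wvec, lbr_self, lbr_wvec_wvec by lia.
  simpl_min. rewrite Nat.sub_succ, Nat.sub_0_r, (vv_zero a x l), (vv_zero a x (l - 1))
    by (intros; apply Ha; lia).
  unfold super_left, Hf, Rdiv. ring.
Qed.

Lemma lbr_super_mid_H s : (1 <= s <= n)%nat -> lbr n (super_mid_lg n a s x) w = 0.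
Proof.
  intros. unfold super_mid_lg.
  rewrite lbr_minusl, !lbr_scall, lbr_addl, !lbr_scall, lbr_minusl, lbr_self, !lbr_wvec_wvec,
    lbr_ev_wvec by lia.
  simpl_min. unfold super_mid, Hf, Rdiv. ring.
Qed.

Lemma lbr_super_right_H r : (1 <= r)%nat -> (S r <= n)%nat -> vv a x (S r) = vv a x n ->
  lbr n (super_right_lg a r x) w = 0.
Proof.
  intros Hr HSr Hv. unfold super_right_lg.
  rewrite lbr_addl, !lbr_scall, !lbr_minusl, !lbr_ev_wvec, lbr_wvec_wvec by lia.
  simpl_min. rewrite Nat.sub_succ, Nat.sub_0_r, Hv. unfold super_right, Rdiv. ring.
Qed.

Lemma lbr_super_corner_H l r : (1 <= l)%nat -> (S r <= n)%nat -> (l <= r)%nat ->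
  vv a x l = 0 -> vv a x (l - 1) = 0 -> vv a x r = vv a x n -> vv a x (S r) = vv a x n ->
  lbr n (super_corner_lg l r x) w = 0.
Proof.
  intros Hl HSr Hlr H1 H2 H3 H4. unfold super_corner_lg.
  rewrite lbr_scall, lbr_addl, !lbr_ev_wvec by lia.
  simpl_min. rewrite Nat.sub_succ, Nat.sub_0_r, H1, H2, H3, H4. ring.
Qed.

End SuperFirstIntegrals.

Section SuperInvariance.
Variables (n : nat) (a : point) (eps : R) (x : point).
Hypothesis Hx : kdom n a eps x.
Local Notation D := (kden n a eps x).
Local Notation Kx := (kahan n a eps x).

Lemma kden_eq k k' : vv a x k = vv a x k' -> D k = D k'.
Proof. intros E. unfold kden. rewrite E. reflexivity. Qed.

Ltac kahan_field :=
  field; repeat split; first [apply (kden_nz n a eps x Hx); lia | apply (kdom_nz n a eps x Hx); lia].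

Lemma super_ratio_kahan s : (1 <= s)%nat -> (S s <= n)%nat -> vv a x (S s) = vv a x (s - 1) ->
  super_ratio s Kx = super_ratio s x.
Proof.
  intros Hs HSs E. unfold super_ratio. rewrite kahan_ratio_inv, (kden_eq (S s) (s - 1) E) by auto.
  kahan_field.
Qed.

Lemma super_mid_kahan s : (1 <= s <= n)%nat -> super_mid n a s Kx = super_mid n a s x.
Proof.
  intros. unfold super_mid. rewrite tail_kahan, vv_kahan, kahan_eq by (auto; lia). kahan_field.
Qed.

Lemma super_left_kahan l : (1 <= l)%nat -> (S l <= n)%nat -> (forall i, (1 <= i <= l)%nat -> a i = 0) ->
  super_left n a l Kx = super_left n a l x.
Proof.
  intros Hl HSl Ha. unfold super_left.
  rewrite tail_kahan, !kahan_eq, Nat.sub_succ, Nat.sub_0_r by (auto; lia).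
  rewrite (kden_eq l 0), (kden_eq (l - 1) 0) by (rewrite vv_zero; [reflexivity|intros; apply Ha; lia]).
  kahan_field.
Qed.

Lemma super_right_kahan r : (1 <= r)%nat -> (S r <= n)%nat ->
  vv a x r = vv a x n -> vv a x (S r) = vv a x n -> super_right a r Kx = super_right a r x.
Proof.
  intros Hr HSr E1 E2. unfold super_right.
  rewrite vv_kahan, !kahan_eq, Nat.sub_succ, Nat.sub_0_r by (auto; lia).
  rewrite (kden_eq (S r) n E2), (kden_eq r n E1). kahan_field.
Qed.

Lemma super_corner_kahan l r : (1 <= l)%nat -> (S r <= n)%nat -> (l <= r)%nat ->
  vv a x l = 0 -> vv a x (l - 1) = 0 -> vv a x r = vv a x n -> vv a x (S r) = vv a x n ->
  super_corner l r Kx = super_corner l r x.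
Proof.
  intros Hl HSr Hlr E1 E2 E3 E4. unfold super_corner.
  rewrite !kahan_eq, Nat.sub_succ, Nat.sub_0_r by lia.
  rewrite (kden_eq (S r) n E4), (kden_eq r n E3), (kden_eq l 0), (kden_eq (l - 1) 0)
    by (rewrite E1 || rewrite E2; reflexivity).
  kahan_field.
Qed.

End SuperInvariance.

(** For [a_i = 0] when [i <= l] or [i > r]: ratios of consecutive coordinates outside
    [l < i <= r], [H] at [s = l + 1], and the bridging functions in between. *)
Definition super_integral n a l r s : point -> R :=
  if Nat.ltb s l then super_ratio s
  else if Nat.eqb s l then
    (if Nat.leb (S (S l)) r then super_left n a l else if Nat.ltb r n then super_corner l r else Hf n a)
  else if Nat.eqb s (S l) then Hf n a
  else if Nat.ltb s r then super_mid n a s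
  else if Nat.eqb s r then super_right a r
  else super_ratio s.

Definition super_lg n a l r s (x : point) : point :=
  if Nat.ltb s l then super_ratio_lg s x
  else if Nat.eqb s l then
    (if Nat.leb (S (S l)) r then super_left_lg n a l x
     else if Nat.ltb r n then super_corner_lg l r x else wvec a x n)
  else if Nat.eqb s (S l) then wvec a x n
  else if Nat.ltb s r then super_mid_lg n a s x
  else if Nat.eqb s r then super_right_lg a r x
  else super_ratio_lg s x.

Definition super_test n a l r s (x : point) : point :=
  if Nat.ltb s l then ev s
  else if Nat.eqb s l then (if Nat.leb (S (S l)) r then ev l else if Nat.ltb r n then ev l else ev (S l))
  else if Nat.eqb s (S l) then ev (S l)
  else if Nat.leb s r then test_vec a x (S l) s
  else ev s.

Definition super_rank n l s : nat := if Nat.eqb s (S l) then n else s.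

Lemma vv_tail a x r n k : (forall i, (r < i <= n)%nat -> a i = 0) -> (r <= k <= n)%nat ->
  vv a x k = vv a x n.
Proof. intros. symmetry. apply vv_const; [lia|]. intros; apply H; lia. Qed.

Section SuperDiagonal.
Variables (n : nat) (a x : point).

Lemma dot_super_ratio s : (1 <= s)%nat -> (S s <= n)%nat ->
  dot n (ev s) (super_ratio_lg s x) = x s / x (S s).
Proof. intros. rewrite dot_ev by lia. unfold super_ratio_lg, ev. nat_cases; try lia. ring. Qed.

Lemma dot_super_left l : (1 <= l)%nat -> (S l <= n)%nat ->
  dot n (ev l) (super_left_lg n a l x) = x l * (Hf n a x - vv a x (S l)) / x (S l).
Proof.
  intros. rewrite dot_ev by lia. unfold super_left_lg, super_left, wvec, ev. nat_cases; try lia. ring.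
Qed.

Lemma dot_super_corner l r : (1 <= l)%nat -> (S r <= n)%nat -> (l <= r)%nat ->
  dot n (ev l) (super_corner_lg l r x) = x l * x (S r).
Proof.
  intros. rewrite dot_ev by lia. unfold super_corner_lg, super_corner, ev. nat_cases; try lia. ring.
Qed.

Lemma dot_super_mid p s : (1 <= p)%nat -> (p < s <= n)%nat ->
  dot n (test_vec a x p s) (super_mid_lg n a s x) = a p * x p * vv a x s * (Hf n a x - vv a x s) / x s.
Proof.
  intros. rewrite dot_test_vec by lia. unfold super_mid_lg, super_mid, wvec, ev. nat_cases; try lia.
  assert (E : vv a x (s - 1) = vv a x s - a s * x s).
  { replace s with (S (s - 1)) at 2 3 4 by lia. rewrite vv_S. ring. }
  rewrite E. unfold Rdiv. ring.
Qed.

Lemma dot_super_right p r : (1 <= p)%nat -> (p < r)%nat -> (S r <= n)%nat ->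
  dot n (test_vec a x p r) (super_right_lg a r x) = a p * x p * x (S r) * vv a x r / x r.
Proof.
  intros. rewrite dot_test_vec by lia. unfold super_right_lg, super_right, wvec, ev. nat_cases; try lia.
  assert (E : vv a x r = vv a x (r - 1) + a r * x r).
  { replace r with (S (r - 1)) at 1 3 4 by lia. rewrite vv_S. reflexivity. }
  rewrite E. unfold Rdiv. ring.
Qed.

End SuperDiagonal.

Section SuperFamily.
Variables (n : nat) (a : point) (l r : nat).
Hypothesis Hlr : (S l <= r <= n)%nat.
Hypothesis Ha : forall i, (1 <= i <= l)%nat -> a i = 0.
Hypothesis Hr : forall i, (r < i <= n)%nat -> a i = 0.

Lemma lg_super_integral x s : torus n x -> (1 <= s <= n - 1)%nat ->
  log_gradient n (super_integral n a l r s) x (super_lg n a l r s x).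
Proof.
  intros Hx Hs. unfold super_integral, super_lg. nat_cases; try lia.
  all: first [ apply lg_super_ratio; [exact Hx|lia] | apply lg_super_left; [exact Hx|lia]
             | apply lg_super_corner, Hx | apply lg_Hf, Hx | apply lg_super_mid; [exact Hx|lia]
             | apply lg_super_right; [exact Hx|lia] ].
Qed.

Lemma super_integral_first x s : torus n x -> (1 <= s <= n - 1)%nat ->
  lbr n (super_lg n a l r s x) (wvec a x n) = 0.
Proof.
  intros Hx Hs. unfold super_lg. nat_cases; try lia; try apply lbr_self.
  all: first [ apply lbr_super_ratio_H; try lia; (apply Ha; lia) || (apply Hr; lia)
             | apply lbr_super_left_H; [lia|lia|exact Ha]
             | apply lbr_super_corner_H; try lia; first [apply vv_zero; intros; apply Ha; lia
                                                        | apply (vv_tail a x r n); [exact Hr|lia]]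
             | apply lbr_super_mid_H; lia
             | apply lbr_super_right_H; try lia; apply (vv_tail a x r n); [exact Hr|lia] ].
Qed.

Lemma super_integral_invariant eps s : (1 <= s <= n - 1)%nat ->
  invariant n a eps (super_integral n a l r s).
Proof.
  intros Hs x Hx. unfold super_integral. nat_cases; try lia; try apply Hf_kahan, Hx.
  all: first [ apply super_ratio_kahan; [exact Hx|lia|lia|];
               rewrite (vv_zero a x (S s)), (vv_zero a x (s - 1)) by (intros; apply Ha; lia); reflexivity
             | apply super_ratio_kahan; [exact Hx|lia|lia|];
               rewrite (vv_tail a x r n (S s)), (vv_tail a x r n (s - 1)) by (exact Hr || lia);
               reflexivity
             | apply super_left_kahan; [exact Hx|lia|lia|exact Ha]
             | apply super_corner_kahan; try lia; first [exact Hx | apply vv_zero; intros; apply Ha; lia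
                                                        | apply (vv_tail a x r n); [exact Hr|lia]]
             | apply super_mid_kahan; [exact Hx|lia]
             | apply super_right_kahan; try lia;
               first [exact Hx | apply (vv_tail a x r n); [exact Hr|lia]] ].
Qed.

End SuperFamily.

Section SuperIndependence.
Variables (n : nat) (a : point) (l r : nat) (x : point).
Hypothesis Hlr : (S l <= r <= n)%nat.
Hypothesis Ha : forall i, (1 <= i <= l)%nat -> a i = 0.
Hypothesis Hr : forall i, (r < i <= n)%nat -> a i = 0.
Hypothesis Hal : a (S l) <> 0.
Hypothesis Hx : torus n x.
Hypothesis Hu : forall s, (S l <= s < r)%nat -> Hf n a x - vv a x s <> 0.
Hypothesis Hv : forall j, (S l <= j <= n)%nat -> vv a x j <> 0.

Lemma super_test_offdiag s s' : (1 <= s <= n - 1)%nat -> (1 <= s' <= n - 1)%nat -> s <> s' ->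
  (super_rank n l s <= super_rank n l s')%nat ->
  dot n (super_test n a l r s x) (super_lg n a l r s' x) = 0.
Proof.
  intros Hs Hs' Hne. unfold super_test, super_lg, super_rank. nat_cases; intros; try lia.
  all: rewrite ?dot_ev, ?dot_test_vec by lia.
  all: unfold super_ratio_lg, super_left_lg, super_mid_lg, super_right_lg, super_corner_lg, wvec, ev;
       nat_cases; try lia.
  all: repeat match goal with
         | |- context [a ?i] => first [rewrite (Ha i) by lia | rewrite (Hr i) by lia] end.
  all: unfold Rdiv; ring.
Qed.

Lemma super_test_diag s : (1 <= s <= n - 1)%nat ->
  dot n (super_test n a l r s x) (super_lg n a l r s x) <> 0.
Proof.
  intros Hs. assert (Hw : a (S l) * x (S l) <> 0)
    by (apply Rmult_integral_contrapositive_currified; [exact Hal|apply Hx; lia]).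
  assert (Hx' : forall i, (1 <= i <= n)%nat -> / x i <> 0)
    by (intros; apply Rinv_neq_0_compat, Hx; assumption).
  unfold super_test, super_lg. nat_cases; try lia.
  all: first [ rewrite dot_super_ratio | rewrite dot_super_left | rewrite dot_super_corner
             | rewrite dot_ev, wvec_in | rewrite dot_super_mid
             | replace s with r by lia; rewrite dot_super_right ]; try lia.
  all: unfold Rdiv; repeat apply Rmult_integral_contrapositive_currified.
  all: first [ exact Hal | apply Hx; lia | apply Hx'; lia | apply Hu; lia | apply Hv; lia ].
Qed.

Lemma super_indep_at : indep_at n (map (super_integral n a l r) (seq 1 (n - 1))) x.
Proof.
  apply (indep_at_triangular n x _ (fun b => super_lg n a l r (S b) x)
    (fun b => super_test n a l r (S b) x) (fun b => super_rank n l (S b)) Hx);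
    rewrite length_map, length_seq.
  - intros b Hb. rewrite nth_map_seq by exact Hb. apply lg_super_integral; [lia|exact Hx|lia].
  - intros b b' Hb Hb' Hne Hrk. apply super_test_offdiag; lia.
  - intros b Hb. apply super_test_diag; lia.
Qed.

End SuperIndependence.

Lemma exists_last_nonzero n (a : point) : (exists i, (1 <= i <= n)%nat /\ a i <> 0) ->
  exists r, (1 <= r <= n)%nat /\ a r <> 0 /\ forall i, (r < i <= n)%nat -> a i = 0.
Proof.
  induction n as [|n IH]; intros (i & Hi & Hai); [lia|].
  destruct (Req_dec (a (S n)) 0) as [E|E].
  - destruct IH as (r & Hr & Har & Hz).
    + exists i. split; [|exact Hai]. destruct (Nat.eq_dec i (S n)); [subst; contradiction|lia].
    + exists r. split; [lia|split; [exact Har|]]. intros j Hj.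
      destruct (Nat.eq_dec j (S n)) as [->|]; [exact E|apply Hz; lia].
  - exists (S n). split; [lia|split; [exact E|]]. intros; lia.
Qed.

Lemma super_func_indep n a l r : (S l <= r <= n)%nat -> (forall i, (1 <= i <= l)%nat -> a i = 0) ->
  (forall i, (r < i <= n)%nat -> a i = 0) -> a (S l) <> 0 -> a r <> 0 ->
  func_indep n (torus n) (map (super_integral n a l r) (seq 1 (n - 1))).
Proof.
  intros Hlr Ha Hr Hal Har y Hy delta Hd.
  destruct (perturb_tail_nonzero n a l r y (delta / 2) Hy Hlr Har ltac:(lra))
    as (y1 & Hy1 & Hclose1 & Hu).
  destruct (perturb_vv_nonzero n a l y1 (delta / 2) Hy1 ltac:(lia) Hal ltac:(lra))
    as (x & Hx & Hclose & Hv & Htail).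
  exists x. split; [exact Hx|split].
  - intros i Hi. specialize (Hclose i Hi). specialize (Hclose1 i Hi).
    replace (x i - y i) with ((x i - y1 i) + (y1 i - y i)) by ring.
    eapply Rle_lt_trans; [apply Rabs_triang|lra].
  - apply super_indep_at; try assumption. intros s Hs. rewrite Htail by lia. apply Hu, Hs.
Qed.

Lemma superintegrable n a l : (exists i, (1 <= i <= n)%nat /\ a i <> 0) ->
  (l < n)%nat -> a (S l) <> 0 -> (forall i, (1 <= i <= l)%nat -> a i = 0) ->
  exists gs : list (point -> R),
    length gs = (n - 1)%nat /\
    Forall (first_integral n a (torus n)) gs /\
    func_indep n (torus n) gs /\
    (forall eps, 0 < eps -> Forall (invariant n a eps) gs).
Proof.
  intros Hex Hl Hal Ha.
  destruct (exists_last_nonzero n a Hex) as (r & Hr & Har & Hz).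
  assert (Hlr : (S l <= r)%nat)
    by (destruct (Nat.le_gt_cases (S l) r); [assumption|]; exfalso; apply Hal, Hz; lia).
  exists (map (super_integral n a l r) (seq 1 (n - 1))). split; [|split; [|split]].
  - rewrite length_map, length_seq. reflexivity.
  - apply Forall_forall. intros g Hg. apply in_map_iff in Hg as (s & <- & Hs). apply in_seq in Hs.
    intros x Hx. exists (fun i => super_lg n a l r s x i / x i). split.
    + apply lg_super_integral; [lia|exact Hx|lia].
    + rewrite first_integral_lbr by exact Hx. apply super_integral_first; auto; lia.
  - apply super_func_indep; auto; lia.
  - intros eps _. apply Forall_forall. intros g Hg. apply in_map_iff in Hg as (s & <- & Hs).
    apply in_seq in Hs. apply super_integral_invariant; auto; lia.
Qed.

Theorem corollary3p3 (n : nat) (a : nat -> R) (l : nat) :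
  (1 <= n)%nat ->
  (exists i, (1 <= i <= n)%nat /\ a i <> 0) ->
  (* l is the smallest integer >= 0 with a_{l+1} <> 0 *)
  (l < n)%nat -> a (S l) <> 0 -> (forall i, (1 <= i <= l)%nat -> a i = 0) ->
  (* Liouville integrability *)
  ((forall eps, 0 < eps ->
      poisson_map n a eps /\ Forall (invariant n a eps) (liouville_list n a l))
   /\ involutive n (torus n) (liouville_list n a l)
   /\ (~ (Nat.odd n = true /\ l = (n - 1)%nat) ->
       func_indep n (torus n) (liouville_list n a l)))
  /\
  (* superintegrability *)
  (exists gs : list (point -> R),
      length gs = (n - 1)%nat /\
      Forall (first_integral n a (torus n)) gs /\
      func_indep n (torus n) gs /\
      (forall eps, 0 < eps -> Forall (invariant n a eps) gs)).
Proof.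
  intros _ Hex Hl Hal Ha. split; [split; [|split]|].
  - intros eps _. split; [apply kahan_poisson_map|apply liouville_invariant; assumption].
  - apply liouville_involutive; assumption.
  - apply liouville_func_indep; assumption.
  - apply (superintegrable n a l); assumption.
Qed.
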